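(* Let $h=h^*\in C^\infty(\mathbb{T}_\theta^4)$ and set $$\mathcal{R}_h=e^{-h}K(\nabla)\Big(\sum_{i=1}^4\delta_i^2(h)\Big)+e^{-h}H(\nabla_{(1)},\nabla_{(2)})\Big(\sum_{i=1}^4\delta_i(h)\,\delta_i(h)\Big)$$ (so that the scalar curvature is a universal constant multiple of $\mathcal{R}_h$). Then $$\varphi_0(\mathcal{R}_h)=\frac12\,\varphi_0\Big(\sum_{i=1}^4e^{-h}\delta_i^2(h)\Big)+\varphi_0\Big(\sum_{i=1}^4G(\nabla)\big(e^{-h}\delta_i(h)\big)\,\delta_i(h)\Big),\qquad G(s)=H(s,-s)=\frac{-4s-3e^{-s}+e^s+2}{4s^2}.$$
   Context: Noncommutative 4-torus: $\theta$ real skew-symmetric $4\times4$; $C^\infty(\mathbb{T}_\theta^4)$ the smooth algebra generated by unitaries $U_1,\dots,U_4$ with $U_kU_l=e^{2\pi i\theta_{kl}}U_lU_k$ (rapidly decreasing Fourier series $\sum a_\ell U^\ell$); $\varphi_0(\sum a_\ell U^\ell)=a_0$ the faithful tracial state; $\delta_j(U_k)=\delta_{jk}U_k$ the commuting derivations. $\Delta(a)=e^{-h}ae^h$, $\nabla=\log\Delta$, i.e. $\nabla(a)=ah-ha$. $K(s)=\frac{1-e^{-s}}{2s}$, $H(s,t)=-\frac{e^{-s-t}((-e^s-3)s(e^t-1)+(e^s-1)(3e^t+1)t)}{4st(s+t)}$; $K,H,G$ are entire (removable singularities). For entire $F(s)=\sum c_js^j$, $F(\nabla)(a)=\sum c_j\nabla^j(a)$;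 for entire $F(s,t)=\sum c_{jk}s^jt^k$, $F(\nabla_{(1)},\nabla_{(2)})(ab)=\sum c_{jk}\nabla^j(a)\nabla^k(b)$, extended linearly. *)

From Stdlib Require Import Reals ZArith List ClassicalEpsilon.
Import ListNotations.
Open Scope R_scope.

Definition C := (R * R)%type.
Definition C0 : C := (0, 0).
Definition C1 : C := (1, 0).
Definition Cadd (x y : C) : C := (fst x + fst y, snd x + snd y).
Definition Cmul (x y : C) : C :=
  (fst x * fst y - snd x * snd y, fst x * snd y + snd x * fst y).
Definition Copp (x : C) : C := (- fst x, - snd x).
Definition Cconj (x : C) : C := (fst x, - snd x).
Definition Cscal (r : R) (x : C) : C := (r * fst x, r * snd x).
Definition Cexpi (t : R) : C := (cos t, sin t).
Definition Cabs (x : C) : R := sqrt (fst x ^ 2 + snd x ^ 2).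
Definition Csum (l : list C) : C := fold_right Cadd C0 l.

Definition Ccv (u : nat -> C) (l : C) : Prop :=
  Un_cv (fun n => fst (u n)) (fst l) /\ Un_cv (fun n => snd (u n)) (snd l).
Definition Clim (u : nat -> C) : C := epsilon (inhabits C0) (fun l => Ccv u l).

Record Z4 := mkZ4 { z1 : Z; z2 : Z; z3 : Z; z4 : Z }.
Definition zc (n : Z4) (j : nat) : Z :=
  match j with 1%nat => z1 n | 2%nat => z2 n | 3%nat => z3 n | 4%nat => z4 n | _ => 0%Z end.
Definition Z4zero : Z4 := mkZ4 0 0 0 0.
Definition Z4opp (n : Z4) : Z4 := mkZ4 (- z1 n) (- z2 n) (- z3 n) (- z4 n).
Definition Z4sub (n m : Z4) : Z4 :=
  mkZ4 (z1 n - z1 m) (z2 n - z2 m) (z3 n - z3 m) (z4 n - z4 m).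
Definition zrange (N : nat) : list Z :=
  map (fun k => (Z.of_nat k - Z.of_nat N)%Z) (seq 0 (2 * N + 1)).
Definition box (N : nat) : list Z4 :=
  flat_map (fun a => flat_map (fun b => flat_map (fun c =>
    map (fun d => mkZ4 a b c d) (zrange N)) (zrange N)) (zrange N)) (zrange N).
Definition pairs4 : list (nat * nat) :=
  [(1,2);(1,3);(1,4);(2,3);(2,4);(3,4)]%nat.

(* ---------- the noncommutative 4-torus, in Fourier coefficients ----------
   An element a is identified with its coefficient function: a = sum_l a(l) U^l,
   with the convention U^l = U1^{l1} U2^{l2} U3^{l3} U4^{l4}.
   theta : nat -> nat -> R, indices 1..4. *)
Definition NCT := Z4 -> C.

Definition rapid (a : NCT) : Prop :=
  forall k : nat, exists M : R, forall n : Z4,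
    Cabs (a n) * (1 + Rabs (IZR (z1 n)) + Rabs (IZR (z2 n))
                    + Rabs (IZR (z3 n)) + Rabs (IZR (z4 n))) ^ k <= M.

(* U^m U^k = phase m k U^{m+k} *)
Definition phase (theta : nat -> nat -> R) (m k : Z4) : C :=
  Cexpi (2 * PI * fold_right Rplus 0
    (map (fun p => theta (snd p) (fst p) * IZR (zc m (snd p)) * IZR (zc k (fst p))) pairs4)).

Definition add (a b : NCT) : NCT := fun n => Cadd (a n) (b n).
Definition opp (a : NCT) : NCT := fun n => Copp (a n).
Definition sub (a b : NCT) : NCT := add a (opp b).
Definition scal (r : R) (a : NCT) : NCT := fun n => Cscal r (a n).
Definition one : NCT := fun n =>
  if (Z.eqb (z1 n) 0 && Z.eqb (z2 n) 0 && Z.eqb (z3 n) 0 && Z.eqb (z4 n) 0)%bool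
  then C1 else C0.

Definition mul (theta : nat -> nat -> R) (a b : NCT) : NCT := fun n =>
  Clim (fun N => Csum (map (fun m =>
    Cmul (Cmul (a m) (b (Z4sub n m))) (phase theta m (Z4sub n m))) (box N))).

(* adjoint: (U^l)^* = U4^{-l4} ... U1^{-l1} *)
Definition star (theta : nat -> nat -> R) (a : NCT) : NCT := fun n =>
  Cmul (Cconj (a (Z4opp n)))
    (Cexpi (2 * PI * fold_right Rplus 0
      (map (fun p => theta (snd p) (fst p) * IZR (zc n (snd p)) * IZR (zc n (fst p))) pairs4))).

Fixpoint powA (theta : nat -> nat -> R) (a : NCT) (k : nat) : NCT :=
  match k with O => one | S k' => mul theta (powA theta a k') a end.

Definition expA (theta : nat -> nat -> R) (a : NCT) : NCT := fun n =>
  Clim (fun N => Csum (map (fun k => Cscal (/ INR (fact k)) (powA theta a k n))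
                          (seq 0 (N + 1)))).

(* canonical derivations: delta_j(U_k) = delta_{jk} U_k *)
Definition delta (j : nat) (a : NCT) : NCT := fun n => Cscal (IZR (zc n j)) (a n).

Definition phi0 (a : NCT) : C := a Z4zero.

Definition sum4 (f : nat -> NCT) : NCT := add (add (add (f 1%nat) (f 2%nat)) (f 3%nat)) (f 4%nat).

Definition nabla (theta : nat -> nat -> R) (h a : NCT) : NCT :=
  sub (mul theta a h) (mul theta h a).

Definition fcalc1 (theta : nat -> nat -> R) (h : NCT) (c : nat -> R) (a : NCT) : NCT :=
  fun n => Clim (fun N => Csum (map (fun j =>
    Cscal (c j) (Nat.iter j (nabla theta h) a n)) (seq 0 (N + 1)))).

(* F(nabla_(1), nabla_(2))(a b) = sum_{j,k} c_{jk} nabla^j(a) nabla^k(b) *)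
Definition fcalc2 (theta : nat -> nat -> R) (h : NCT) (c : nat -> nat -> R) (a b : NCT) : NCT :=
  fun n => Clim (fun N => Csum (map (fun j => Csum (map (fun k =>
    Cscal (c j k) (mul theta (Nat.iter j (nabla theta h) a) (Nat.iter k (nabla theta h) b) n))
    (seq 0 (N + 1)))) (seq 0 (N + 1)))).

Definition Kf (s : R) : R := (1 - exp (- s)) / (2 * s).
Definition Hf (s t : R) : R :=
  - (exp (- s - t) * ((- exp s - 3) * s * (exp t - 1) + (exp s - 1) * (3 * exp t + 1) * t))
  / (4 * s * t * (s + t)).
Definition Gf (s : R) : R := (- 4 * s - 3 * exp (- s) + exp s + 2) / (4 * s ^ 2).

(* c is the Taylor coefficient sequence of the entire function with values F
   off the removable singularity *)
Definition taylor1 (c : nat -> R) (F : R -> R) : Prop :=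
  forall s, s <> 0 -> Pser c s (F s).
Definition taylor2 (c : nat -> nat -> R) (F : R -> R -> R) : Prop :=
  forall s t, s <> 0 -> t <> 0 -> s + t <> 0 ->
    Un_cv (fun N => sum_f_R0 (fun j => sum_f_R0 (fun k => c j k * s ^ j * t ^ k) N) N) (F s t)
    /\ exists M, forall N,
       sum_f_R0 (fun j => sum_f_R0 (fun k => Rabs (c j k * s ^ j * t ^ k)) N) N <= M.

Definition curvR (theta : nat -> nat -> R) (cK : nat -> R) (cH : nat -> nat -> R) (h : NCT) : NCT :=
  add (mul theta (expA theta (opp h)) (fcalc1 theta h cK (sum4 (fun i => delta i (delta i h)))))
      (mul theta (expA theta (opp h)) (sum4 (fun i => fcalc2 theta h cH (delta i h) (delta i h)))).

(* Rapid decay of h bounds h, delta_i h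
      and delta_i^2 h in l^1 (bnd_rapid).
   2. Algebra of the trace.  phi0 (y nabla(z)) = - phi0 (nabla(y) z); e^{-h}
      commutes with h, hence with nabla, so phi0 (e^{-h} nabla^{j+1} x) = 0 and
      phi0 (e^{-h} nabla^j(a) nabla^k(a)) = (-1)^k phi0 (nabla^{j+k}(e^{-h} a) a).
   3. Real analysis of the coefficients.  c_K(0) = lim_{s->0} K(s) = 1/2, and
      sum_{j+k=n} c^H_jk (-1)^k = c^G_n because both sides are the Taylor
      coefficients of s |-> H(s,-s) = G(s); the value of H on the singular line
      s + t = 0 is reached as a limit through the derivative of its numerator.
   Combining 2 and 3: only the constant coefficient of K survives in
   phi0 (e^{-h} K(nabla)(X)) (trace_K_term), and the double series of
   H(nabla_1, nabla_2) collapses under phi0 (e^{-h} .) to the series of G(nabla)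
   (trace_H_term). *)

From Stdlib Require Import Reals Lra Lia List Permutation ZArith.
From Stdlib Require Import FunctionalExtensionality Classical ClassicalEpsilon.
From Coquelicot Require AutoDerive.
From Pilot Require Import Defs.
Import ListNotations.
Open Scope R_scope.

Lemma C_ext (x y : C) : fst x = fst y -> snd x = snd y -> x = y.
Proof. destruct x, y; simpl; intros; subst; reflexivity. Qed.

Ltac Cunf := unfold Cadd, Cmul, Copp, Cscal, C0, C1, Cconj in *.
Ltac Cring := apply C_ext; Cunf; simpl; ring.

Definition Csub (x y : C) : C := Cadd x (Copp y).

(* An l^1-type norm on C; it is equivalent to the modulus and is linear in the
   real and imaginary parts, which keeps every estimate elementary. *)
Definition cnorm (x : C) : R := Rabs (fst x) + Rabs (snd x).

Lemma cnorm_ge0 x : 0 <= cnorm x.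
Proof. unfold cnorm; pose proof (Rabs_pos (fst x)); pose proof (Rabs_pos (snd x)); lra. Qed.

Lemma cnorm_add x y : cnorm (Cadd x y) <= cnorm x + cnorm y.
Proof. unfold cnorm, Cadd; simpl.
  pose proof (Rabs_triang (fst x) (fst y)); pose proof (Rabs_triang (snd x) (snd y)); lra. Qed.

Lemma cnorm_opp x : cnorm (Copp x) = cnorm x.
Proof. unfold cnorm, Copp; simpl; rewrite !Rabs_Ropp; reflexivity. Qed.

Lemma cnorm_scal r x : cnorm (Cscal r x) = Rabs r * cnorm x.
Proof. unfold cnorm, Cscal; simpl; rewrite !Rabs_mult; ring. Qed.

Lemma cnorm_mul x y : cnorm (Cmul x y) <= cnorm x * cnorm y.
Proof. destruct x as [a b], y as [c d]; unfold cnorm, Cmul; simpl.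
  pose proof (Rabs_triang (a*c) (- (b*d))) as Hre.
  pose proof (Rabs_triang (a*d) (b*c)) as Him.
  rewrite Rabs_Ropp in Hre. rewrite !Rabs_mult in *.
  pose proof (Rabs_pos a); pose proof (Rabs_pos b); pose proof (Rabs_pos c); pose proof (Rabs_pos d).
  unfold Rminus. nra. Qed.

Lemma cnorm_mul3 x y z : cnorm (Cmul (Cmul x y) z) <= cnorm x * cnorm y * cnorm z.
Proof. eapply Rle_trans; [apply cnorm_mul|].
  apply Rmult_le_compat_r; [apply cnorm_ge0|apply cnorm_mul]. Qed.

Lemma cnorm_C0 : cnorm C0 = 0.
Proof. unfold cnorm, C0; simpl; rewrite Rabs_R0; ring. Qed.

Lemma cnorm_le_fst x : Rabs (fst x) <= cnorm x.
Proof. unfold cnorm; pose proof (Rabs_pos (snd x)); lra. Qed.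

Lemma cnorm_le_snd x : Rabs (snd x) <= cnorm x.
Proof. unfold cnorm; pose proof (Rabs_pos (fst x)); lra. Qed.

Lemma cnorm_sub_sym x y : cnorm (Csub x y) = cnorm (Csub y x).
Proof. replace (Csub y x) with (Copp (Csub x y)) by (unfold Csub; Cring). rewrite cnorm_opp; auto. Qed.

Lemma cnorm_fst_sub x y : Rabs (fst x - fst y) <= cnorm (Csub x y).
Proof. unfold cnorm, Csub, Cadd, Copp; simpl. pose proof (Rabs_pos (snd x + - snd y)). unfold Rminus; lra. Qed.

Lemma cnorm_snd_sub x y : Rabs (snd x - snd y) <= cnorm (Csub x y).
Proof. unfold cnorm, Csub, Cadd, Copp; simpl. pose proof (Rabs_pos (fst x + - fst y)). unfold Rminus; lra. Qed.

Lemma cnorm_Cabs x : cnorm x <= 2 * Cabs x.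
Proof. unfold cnorm, Cabs.
  assert (Rabs (fst x) <= sqrt (fst x ^ 2 + snd x ^ 2)).
  { rewrite <- sqrt_Rsqr_abs. apply sqrt_le_1_alt. unfold Rsqr; simpl. nra. }
  assert (Rabs (snd x) <= sqrt (fst x ^ 2 + snd x ^ 2)).
  { rewrite <- sqrt_Rsqr_abs. apply sqrt_le_1_alt. unfold Rsqr; simpl. nra. }
  lra. Qed.

Lemma Cexpi_add a b : Cexpi (a + b) = Cmul (Cexpi a) (Cexpi b).
Proof. unfold Cexpi, Cmul; simpl; rewrite cos_plus, sin_plus; apply C_ext; simpl; ring. Qed.

Lemma Cexpi_0 : Cexpi 0 = C1.
Proof. unfold Cexpi, C1; rewrite cos_0, sin_0; reflexivity. Qed.

Lemma cnorm_Cexpi t : cnorm (Cexpi t) <= 2.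
Proof. unfold cnorm, Cexpi; simpl.
  pose proof (COS_bound t); pose proof (SIN_bound t).
  unfold Rabs; destruct (Rcase_abs (cos t)), (Rcase_abs (sin t)); lra. Qed.

Lemma Rabs_le_inv a b : Rabs a <= b -> - b <= a <= b.
Proof. intros H; pose proof (Rle_abs a); pose proof (Rle_abs (-a)); rewrite Rabs_Ropp in *; lra. Qed.

Lemma Rabs_le_eps_eq0 x : (forall eps, 0 < eps -> Rabs x <= eps) -> x = 0.
Proof. intros H. destruct (Req_dec x 0) as [E|E]; auto. exfalso.
  pose proof (Rabs_pos_lt _ E). pose proof (H (Rabs x / 2) ltac:(lra)). lra. Qed.

Lemma pow_le1 x n : 0 <= x <= 1 -> x ^ n <= 1.
Proof. intros H; induction n; simpl; [lra|]. pose proof (pow_le x n ltac:(lra)). nra. Qed.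

Lemma lim_le (u : nat -> R) l a K : Un_cv u l -> (forall N, Rabs (u N - a) <= K) -> Rabs (l - a) <= K.
Proof. intros H Hb. apply Rnot_lt_le; intro Hlt.
  destruct (H ((Rabs (l - a) - K)/2)) as [N HN]; [lra|]. specialize (HN N (le_n _)). specialize (Hb N).
  unfold Rdist in HN. pose proof (Rabs_triang (u N - a) (l - u N)) as Htri.
  replace (u N - a + (l - u N)) with (l - a) in Htri by ring. rewrite Rabs_minus_sym in HN. lra. Qed.

Lemma lim_le_ev (u : nat -> R) l a K N0 : Un_cv u l ->
  (forall N, (N0 <= N)%nat -> Rabs (u N - a) <= K) -> Rabs (l - a) <= K.
Proof. intros H Hb. apply (lim_le (fun N => u (N + N0)%nat)).
  - intros eps He. destruct (H eps He) as [N HN]. exists N. intros n Hn. apply HN. lia.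
  - intros N; apply Hb; lia. Qed.

Lemma Cauchy_crit_ext (u v : nat -> R) : (forall N, u N = v N) -> Cauchy_crit u -> Cauchy_crit v.
Proof. intros E H eps He. destruct (H eps He) as [N HN]. exists N. intros; rewrite <- !E; auto. Qed.

Lemma cauchy_scal (a : nat -> R) c : Cauchy_crit (sum_f_R0 a) -> Cauchy_crit (sum_f_R0 (fun k => a k * c)).
Proof. intros H. apply CV_Cauchy. destruct (R_complete _ H) as [l Hl]. exists (l * c).
  eapply Un_cv_ext; [|apply (CV_mult _ (fun _ => c) _ _ Hl)].
  - intros N; simpl. rewrite Rmult_comm. apply scal_sum.
  - intros eps He; exists O; intros; unfold Rdist; rewrite Rminus_diag, Rabs_R0; lra. Qed.

Definition lsum {T} (g : T -> R) (l : list T) : R := fold_right Rplus 0 (map g l).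

Lemma lsum_nil {T} (g : T -> R) : lsum g [] = 0. Proof. reflexivity. Qed.
Lemma lsum_cons {T} (g : T -> R) a l : lsum g (a :: l) = g a + lsum g l. Proof. reflexivity. Qed.
Lemma lsum_app {T} (g : T -> R) l1 l2 : lsum g (l1 ++ l2) = lsum g l1 + lsum g l2.
Proof. induction l1; unfold lsum in *; simpl; [ring|]. rewrite IHl1; ring. Qed.
Lemma lsum_ext {T} (g1 g2 : T -> R) l : (forall x, In x l -> g1 x = g2 x) -> lsum g1 l = lsum g2 l.
Proof. induction l; intros; rewrite ?lsum_nil, ?lsum_cons; auto. rewrite H by (left; auto).
  rewrite IHl; auto. intros; apply H; right; auto. Qed.
Lemma lsum_const0 {T} l : lsum (fun _ : T => 0) l = 0.
Proof. induction l; auto. rewrite lsum_cons, IHl; ring. Qed.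
Lemma lsum_le {T} (g1 g2 : T -> R) l : (forall x, In x l -> g1 x <= g2 x) -> lsum g1 l <= lsum g2 l.
Proof. induction l; intros H; rewrite ?lsum_nil, ?lsum_cons; [lra|].
  pose proof (H a (or_introl eq_refl)). pose proof (IHl (fun x h => H x (or_intror h))). lra. Qed.
Lemma lsum_ge0 {T} (g : T -> R) l : (forall x, In x l -> 0 <= g x) -> 0 <= lsum g l.
Proof. intros H. rewrite <- (lsum_const0 l). apply lsum_le; auto. Qed.
Lemma lsum_plus {T} (g1 g2 : T -> R) l : lsum (fun x => g1 x + g2 x) l = lsum g1 l + lsum g2 l.
Proof. induction l; rewrite ?lsum_nil, ?lsum_cons; [ring|]. rewrite IHl; ring. Qed.
Lemma lsum_scal {T} (g : T -> R) c l : lsum (fun x => c * g x) l = c * lsum g l.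
Proof. induction l; rewrite ?lsum_nil, ?lsum_cons; [ring|]. rewrite IHl; ring. Qed.
Lemma lsum_scal_r {T} (g : T -> R) c l : lsum (fun x => g x * c) l = lsum g l * c.
Proof. rewrite (lsum_ext _ (fun x => c * g x)) by (intros; ring). rewrite lsum_scal; ring. Qed.
Lemma lsum_opp {T} (g : T -> R) l : lsum (fun x => - g x) l = - lsum g l.
Proof. induction l; rewrite ?lsum_nil, ?lsum_cons; [ring|]. rewrite IHl; ring. Qed.
Lemma lsum_map {T U} (g : U -> R) (f : T -> U) l : lsum g (map f l) = lsum (fun x => g (f x)) l.
Proof. unfold lsum; rewrite map_map; reflexivity. Qed.
Lemma lsum_swap {T U} (g : T -> U -> R) l1 l2 :
  lsum (fun x => lsum (fun y => g x y) l2) l1 = lsum (fun y => lsum (fun x => g x y) l1) l2.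
Proof. induction l1.
  - rewrite lsum_nil. symmetry. apply lsum_const0.
  - rewrite lsum_cons, IHl1. rewrite <- lsum_plus. apply lsum_ext; intros. rewrite lsum_cons; ring. Qed.
Lemma lsum_abs {T} (g : T -> R) l : Rabs (lsum g l) <= lsum (fun x => Rabs (g x)) l.
Proof. induction l. rewrite !lsum_nil, Rabs_R0; lra.
  rewrite !lsum_cons. pose proof (Rabs_triang (g a) (lsum g l)); lra. Qed.
Lemma lsum_flat_map {T U} (g : U -> R) (f : T -> list U) l :
  lsum g (flat_map f l) = lsum (fun x => lsum g (f x)) l.
Proof. induction l; simpl; auto. rewrite lsum_app, lsum_cons, IHl; reflexivity. Qed.
Lemma lsum_list_prod {T U} (g : T * U -> R) l1 l2 :
  lsum g (list_prod l1 l2) = lsum (fun x => lsum (fun y => g (x, y)) l2) l1.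
Proof. induction l1; simpl; auto. rewrite lsum_app, lsum_cons, IHl1, lsum_map; reflexivity. Qed.
Lemma lsum_le_len {T} (g : T -> R) l e : (forall x, In x l -> g x <= e) -> lsum g l <= INR (length l) * e.
Proof. induction l; intros H. rewrite lsum_nil; simpl; lra.
  rewrite lsum_cons; simpl length; rewrite S_INR.
  pose proof (H a (or_introl eq_refl)). pose proof (IHl (fun x h => H x (or_intror h))). lra. Qed.
Lemma lsum_perm {T} (g : T -> R) l l' : Permutation l l' -> lsum g l = lsum g l'.
Proof. induction 1; rewrite ?lsum_cons; try lra. Qed.
Lemma lsum_seq (g : nat -> R) N : lsum g (seq 0 (N + 1)) = sum_f_R0 g N.
Proof. induction N. simpl. rewrite lsum_cons, lsum_nil; ring.
  replace (S N + 1)%nat with (S (N + 1)) by lia. rewrite seq_S, lsum_app, IHN, lsum_cons, lsum_nil, tech5.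
  replace (0 + (N + 1))%nat with (S N) by lia. ring. Qed.

Lemma Csum_fst {T} (f : T -> C) l : fst (Csum (map f l)) = lsum (fun x => fst (f x)) l.
Proof. induction l; simpl; auto. rewrite lsum_cons, <- IHl; reflexivity. Qed.
Lemma Csum_snd {T} (f : T -> C) l : snd (Csum (map f l)) = lsum (fun x => snd (f x)) l.
Proof. induction l; simpl; auto. rewrite lsum_cons, <- IHl; reflexivity. Qed.
Lemma cnorm_Csum {T} (f : T -> C) l : cnorm (Csum (map f l)) <= lsum (fun x => cnorm (f x)) l.
Proof. induction l; simpl. rewrite cnorm_C0, lsum_nil; lra.
  rewrite lsum_cons. pose proof (cnorm_add (f a) (Csum (map f l))); lra. Qed.
Lemma Csum_app (l1 l2 : list C) : Csum (l1 ++ l2) = Cadd (Csum l1) (Csum l2).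
Proof. induction l1; simpl. unfold C0; Cring. rewrite IHl1; Cring. Qed.
Lemma Csum_zero {T} (f : T -> C) l : (forall x, In x l -> f x = C0) -> Csum (map f l) = C0.
Proof. induction l; intros H; simpl; auto. rewrite H by (left; auto).
  rewrite IHl by (intros; apply H; right; auto). unfold C0; Cring. Qed.
Lemma Csum_list_prod {T U} (f : T * U -> C) l1 l2 :
  Csum (map f (list_prod l1 l2)) = Csum (map (fun x => Csum (map (fun y => f (x, y)) l2)) l1).
Proof. apply C_ext; rewrite ?Csum_fst, ?Csum_snd, lsum_list_prod; apply lsum_ext; intros;
  rewrite ?Csum_fst, ?Csum_snd; auto. Qed.

Class EqDec (T : Type) := eqd : forall x y : T, {x = y} + {x <> y}.

#[export] Instance EqDec_prod {T U} {ET : EqDec T} {EU : EqDec U} : EqDec (T * U).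
Proof. intros [a b] [a' b']. destruct (eqd a a'), (eqd b b'); subst;
  try (right; intro E; inversion E; contradiction). left; reflexivity. Defined.

#[export] Instance EqDec_nat : EqDec nat := Nat.eq_dec.
#[export] Instance EqDec_Z : EqDec Z := Z.eq_dec.

Lemma NoDup_map_injective {T U} (f : T -> U) l :
  (forall x y, f x = f y -> x = y) -> NoDup l -> NoDup (map f l).
Proof. intros Hf Hl; induction Hl; simpl; constructor; auto.
  intro Hin; apply in_map_iff in Hin as [y [Hy Hy']]. apply Hf in Hy; subst; auto. Qed.

Lemma NoDup_flat_map_disjoint {T U} (f : T -> list U) l : NoDup l -> (forall x, In x l -> NoDup (f x)) ->
  (forall x y z, In x l -> In y l -> x <> y -> In z (f x) -> ~ In z (f y)) -> NoDup (flat_map f l).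
Proof. induction 1 as [|a l Ha Hl IH]; intros Hf Hd; simpl; [constructor|].
  apply NoDup_app. apply Hf; left; auto. apply IH; auto. intros; apply Hf; right; auto.
  intros x y z H1 H2 H3 H4; apply (Hd x y z); auto; right; auto.
  intros z Hz Hz'. apply in_flat_map in Hz' as [y [Hy Hzy]].
  apply (Hd a y z); auto. left; auto. right; auto. intro; subst; contradiction. Qed.

Lemma NoDup_list_prod {T U} (l1 : list T) (l2 : list U) :
  NoDup l1 -> NoDup l2 -> NoDup (list_prod l1 l2).
Proof. intros H1 H2. assert (E : list_prod l1 l2 = flat_map (fun x => map (fun y => (x, y)) l2) l1)
  by (clear; induction l1; simpl; auto; rewrite IHl1; auto). rewrite E.
  apply NoDup_flat_map_disjoint; auto.
  - intros. apply NoDup_map_injective; auto. intros a b Eab; inversion Eab; auto.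
  - intros x y z _ _ Hxy Hz Hz'. apply in_map_iff in Hz as [a [<- _]].
    apply in_map_iff in Hz' as [b [Eb _]]. inversion Eb; auto. Qed.

Section ListSums.
Context {T : Type} {ET : EqDec T}.

Lemma lsum_incl_le (g : T -> R) l l' : (forall x, 0 <= g x) -> NoDup l -> NoDup l' -> incl l l' ->
  lsum g l <= lsum g l'.
Proof. revert l'; induction l; intros l' Hg Hl Hl' Hi.
  - simpl. apply lsum_ge0; auto.
  - assert (Ha : In a l') by (apply Hi; left; auto).
    apply in_split in Ha as [l1 [l2 ->]].
    rewrite lsum_app, lsum_cons. inversion Hl; subst.
    assert (Hrec : lsum g l <= lsum g (l1 ++ l2)).
    { apply IHl; auto. eapply NoDup_remove_1; eauto.
      intros x Hx. assert (Hx' : In x (l1 ++ a :: l2)) by (apply Hi; right; auto).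
      apply in_app_or in Hx'. apply in_or_app. destruct Hx' as [H|[H|H]]; auto. subst; contradiction. }
    rewrite lsum_app in Hrec. rewrite lsum_cons; lra. Qed.

Lemma lsum_single (g : T -> R) x0 l : NoDup l -> In x0 l -> (forall x, x <> x0 -> g x = 0) ->
  lsum g l = g x0.
Proof. intros Hl Hi Hg. apply in_split in Hi as [l1 [l2 ->]].
  rewrite lsum_app, lsum_cons.
  apply NoDup_remove_2 in Hl.
  rewrite (lsum_ext g (fun _ => 0) l1), (lsum_ext g (fun _ => 0) l2), !lsum_const0; try ring;
  intros x Hx; apply Hg; intro; subst; apply Hl; apply in_or_app; auto. Qed.

Lemma nodup_union l1 l2 : NoDup (nodup eqd (l1 ++ l2)) /\ incl l1 (nodup eqd (l1 ++ l2))
   /\ incl l2 (nodup eqd (l1 ++ l2)).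
Proof. split; [apply NoDup_nodup|]. split; intros x Hx; apply nodup_In; apply in_or_app; auto. Qed.

Lemma lsum_split (g : T -> R) A B : NoDup A -> NoDup B -> incl A B ->
  lsum g B = lsum g A + lsum g (filter (fun x => if in_dec eqd x A then false else true) B).
Proof. intros HA HB HI. rewrite <- lsum_app. apply lsum_perm. apply NoDup_Permutation; auto.
  - apply NoDup_app; auto. apply NoDup_filter; auto.
    intros x Hx Hx'. apply filter_In in Hx' as [_ H]. destruct (in_dec eqd x A); congruence.
  - intros x; split; intros H.
    + destruct (in_dec eqd x A). apply in_or_app; auto. apply in_or_app; right. apply filter_In; split; auto.
      destruct (in_dec eqd x A); congruence.
    + apply in_app_or in H as [H|H]; auto. apply filter_In in H; tauto. Qed.

Lemma lsum_diff_le (g : T -> R) A B : NoDup A -> NoDup B -> incl A B ->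
  Rabs (lsum g B - lsum g A) <= lsum (fun x => Rabs (g x)) B - lsum (fun x => Rabs (g x)) A.
Proof. intros HA HB HI. rewrite (lsum_split g A B), (lsum_split (fun x => Rabs (g x)) A B) by auto.
  set (rest := filter (fun x => if in_dec eqd x A then false else true) B).
  pose proof (lsum_abs g rest). replace (lsum g A + lsum g rest - lsum g A) with (lsum g rest) by ring.
  lra. Qed.

End ListSums.

(** * Unconditional sums of real families *)

Section RealSums.
Context {T : Type} {ET : EqDec T}.

Definition hasSumR (g : T -> R) (s : R) : Prop :=
  forall eps, 0 < eps -> exists l0, NoDup l0 /\
    forall l, NoDup l -> incl l0 l -> Rabs (lsum g l - s) <= eps.

Definition boundedR (g : T -> R) (M : R) := forall l, NoDup l -> lsum (fun x => Rabs (g x)) l <= M.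

Lemma hasSumR_le_of_both g s1 s2 : hasSumR g s1 -> hasSumR g s2 -> s1 <= s2.
Proof. intros H1 H2. apply Rnot_lt_le; intro Hlt.
  destruct (H1 ((s1 - s2)/3)) as [l1 [N1 P1]]; [lra|].
  destruct (H2 ((s1 - s2)/3)) as [l2 [N2 P2]]; [lra|].
  destruct (nodup_union l1 l2) as [Nd [I1 I2]].
  specialize (P1 _ Nd I1); specialize (P2 _ Nd I2).
  apply Rabs_le_inv in P1; apply Rabs_le_inv in P2; lra. Qed.

Lemma hasSumR_unique g s1 s2 : hasSumR g s1 -> hasSumR g s2 -> s1 = s2.
Proof. intros H1 H2. apply Rle_antisym; eapply hasSumR_le_of_both; eauto. Qed.

Lemma hasSumR_ext g1 g2 s : (forall x, g1 x = g2 x) -> hasSumR g1 s -> hasSumR g2 s.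
Proof. intros He H eps He'. destruct (H eps He') as [l0 [N P]]. exists l0; split; auto.
  intros; rewrite <- (lsum_ext g1 g2); auto. Qed.

Lemma hasSumR_lin a b g1 g2 s1 s2 : hasSumR g1 s1 -> hasSumR g2 s2 ->
  hasSumR (fun x => a * g1 x + b * g2 x) (a * s1 + b * s2).
Proof. intros H1 H2 eps He.
  set (e := eps / (2 * (Rabs a + Rabs b + 1))).
  assert (Hd : 0 < 2 * (Rabs a + Rabs b + 1)) by (pose proof (Rabs_pos a); pose proof (Rabs_pos b); lra).
  assert (He0 : 0 < e) by (unfold e; apply Rdiv_lt_0_compat; lra).
  destruct (H1 e He0) as [l1 [N1 P1]]; destruct (H2 e He0) as [l2 [N2 P2]].
  destruct (nodup_union l1 l2) as [Nd [I1 I2]].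
  exists (nodup eqd (l1 ++ l2)); split; auto. intros l Hl Hi.
  specialize (P1 l Hl (incl_tran I1 Hi)); specialize (P2 l Hl (incl_tran I2 Hi)).
  rewrite lsum_plus, lsum_scal, lsum_scal.
  replace (a * lsum g1 l + b * lsum g2 l - (a * s1 + b * s2))
    with (a * (lsum g1 l - s1) + b * (lsum g2 l - s2)) by ring.
  eapply Rle_trans; [apply Rabs_triang|]. rewrite !Rabs_mult.
  assert (Rabs a * Rabs (lsum g1 l - s1) <= Rabs a * e) by (apply Rmult_le_compat_l; auto; apply Rabs_pos).
  assert (Rabs b * Rabs (lsum g2 l - s2) <= Rabs b * e) by (apply Rmult_le_compat_l; auto; apply Rabs_pos).
  assert ((Rabs a + Rabs b) * e <= eps).
  { unfold e. apply (Rmult_le_reg_r (2 * (Rabs a + Rabs b + 1))); auto.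
    field_simplify; [|lra]. pose proof (Rabs_pos a); pose proof (Rabs_pos b); nra. }
  lra. Qed.

Lemma hasSumR_add g1 g2 s1 s2 : hasSumR g1 s1 -> hasSumR g2 s2 -> hasSumR (fun x => g1 x + g2 x) (s1 + s2).
Proof. intros H1 H2. pose proof (hasSumR_lin 1 1 _ _ _ _ H1 H2).
  replace (s1 + s2) with (1 * s1 + 1 * s2) by ring. eapply hasSumR_ext; [|eauto]. intros; simpl; ring. Qed.

Lemma hasSumR_sub g1 g2 s1 s2 : hasSumR g1 s1 -> hasSumR g2 s2 -> hasSumR (fun x => g1 x - g2 x) (s1 - s2).
Proof. intros H1 H2. pose proof (hasSumR_lin 1 (-1) _ _ _ _ H1 H2).
  replace (s1 - s2) with (1 * s1 + -1 * s2) by ring. eapply hasSumR_ext; [|eauto]. intros; simpl; ring. Qed.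

Lemma hasSumR_ge0 g s : hasSumR g s -> (forall x, 0 <= g x) -> 0 <= s.
Proof. intros H Hg. apply Rnot_lt_le; intro Hs.
  destruct (H (- s / 2)) as [l0 [N P]]; [lra|]. specialize (P l0 N (incl_refl _)).
  pose proof (lsum_ge0 g l0 (fun x _ => Hg x)). apply Rabs_le_inv in P; lra. Qed.

Lemma hasSumR_mono g1 g2 s1 s2 : hasSumR g1 s1 -> hasSumR g2 s2 -> (forall x, g1 x <= g2 x) -> s1 <= s2.
Proof. intros H1 H2 Hle. pose proof (hasSumR_ge0 _ _ (hasSumR_sub _ _ _ _ H2 H1)) as H.
  assert (0 <= s2 - s1) by (apply H; intros; specialize (Hle x); lra). lra. Qed.

Lemma hasSumR_bound g s M : hasSumR g s -> boundedR g M -> Rabs s <= M.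
Proof. intros H Hb. apply Rnot_lt_le; intro Hs.
  destruct (H ((Rabs s - M) / 2)) as [l0 [N P]]; [lra|]. specialize (P l0 N (incl_refl _)).
  specialize (Hb l0 N). pose proof (lsum_abs g l0).
  pose proof (Rabs_triang_inv s (lsum g l0)). rewrite Rabs_minus_sym in P. lra. Qed.

(* Completeness: a nonnegative family with bounded partial sums is summable
   (to the supremum of its partial sums). *)
Lemma hasSumR_nonneg_ex g M : (forall x, 0 <= g x) -> (forall l, NoDup l -> lsum g l <= M) ->
  exists s, hasSumR g s.
Proof. intros Hg Hb.
  set (E := fun r => exists l, NoDup l /\ r = lsum g l).
  assert (HE : bound E) by (exists M; intros r [l [N ->]]; auto).
  assert (HE2 : exists x, E x) by (exists 0; exists []; split; [constructor|reflexivity]).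
  destruct (completeness E HE HE2) as [m [Hub Hlub]].
  exists m. intros eps He.
  destruct (classic (exists l0, NoDup l0 /\ m - eps < lsum g l0)) as [[l0 [N P]]|Hn].
  - exists l0; split; auto. intros l Hl Hi.
    assert (lsum g l0 <= lsum g l) by (apply lsum_incl_le; auto).
    assert (lsum g l <= m) by (apply Hub; exists l; auto).
    apply Rabs_le; lra.
  - exfalso. assert (m <= m - eps); [|lra]. apply Hlub. intros r [l [N ->]].
    apply Rnot_lt_le; intro; apply Hn; exists l; auto. Qed.

(* Absolutely summable families are summable: split g into positive and negative parts. *)
Lemma hasSumR_ex g M : boundedR g M -> exists s, hasSumR g s /\ Rabs s <= M.
Proof. intros Hb.
  destruct (hasSumR_nonneg_ex (fun x => (Rabs (g x) + g x) / 2) M) as [sp Hp].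
  { intros; pose proof (Rabs_pos (g x)); pose proof (Rle_abs (- g x)); rewrite Rabs_Ropp in *; lra. }
  { intros l N. eapply Rle_trans; [|apply (Hb l N)]. apply lsum_le; intros.
    pose proof (Rle_abs (g x)); lra. }
  destruct (hasSumR_nonneg_ex (fun x => (Rabs (g x) - g x) / 2) M) as [sm Hm].
  { intros; pose proof (Rabs_pos (g x)); pose proof (Rle_abs (g x)); lra. }
  { intros l N. eapply Rle_trans; [|apply (Hb l N)]. apply lsum_le; intros.
    pose proof (Rle_abs (- g x)); rewrite Rabs_Ropp in *; lra. }
  exists (sp - sm). assert (H : hasSumR g (sp - sm)).
  { eapply hasSumR_ext; [|apply (hasSumR_sub _ _ _ _ Hp Hm)]. intros; simpl; field. }
  split; auto. eapply hasSumR_bound; eauto. Qed.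

Lemma hasSumR_single g x0 : (forall x, x <> x0 -> g x = 0) -> hasSumR g (g x0).
Proof. intros Hg eps He. exists [x0]; split; [repeat constructor; auto|].
  intros l Hl Hi. rewrite (lsum_single g x0 l); auto. rewrite Rminus_diag, Rabs_R0; lra.
  apply Hi; left; auto. Qed.

Lemma hasSumR_zero : hasSumR (fun _ => 0) 0.
Proof. intros eps He; exists []; split; [constructor|].
  intros; rewrite lsum_const0, Rminus_diag, Rabs_R0; lra. Qed.

Lemma hasSumR_lsum {I} (g : I -> T -> R) (s : I -> R) (L : list I) :
  (forall i, In i L -> hasSumR (g i) (s i)) -> hasSumR (fun x => lsum (fun i => g i x) L) (lsum s L).
Proof. induction L; intros H.
  - eapply hasSumR_ext; [|apply hasSumR_zero]. intros; rewrite lsum_nil; auto.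
  - rewrite lsum_cons. eapply hasSumR_ext;
      [|apply hasSumR_add; [apply H; left; auto|apply IHL; intros; apply H; right; auto]].
    intros; rewrite lsum_cons; auto. Qed.

Lemma common_list {I} (P : I -> list T -> Prop) (L : list I) (B : list T) :
  (forall i, In i L -> exists l0, NoDup l0 /\ forall l, NoDup l -> incl l0 l -> P i l) ->
  exists Y, NoDup Y /\ incl B Y /\ forall i, In i L -> forall l, NoDup l -> incl Y l -> P i l.
Proof. revert B; induction L; intros B H.
  - exists (nodup eqd B). split; [apply NoDup_nodup|]. split; [intros x Hx; apply nodup_In; auto|].
    intros i [].
  - destruct (H a (or_introl eq_refl)) as [l0 [N0 P0]].
    destruct (IHL (B ++ l0)) as [Y [NY [IY PY]]]; [intros; apply H; right; auto|].
    exists Y; split; auto; split. intros x Hx; apply IY, in_or_app; auto.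
    intros i [<-|Hi] l Hl Hl'. apply P0; auto. intros x Hx; apply Hl', IY, in_or_app; auto.
    apply PY; auto. Qed.

Lemma hasSumR_exhaust g s (L : nat -> list T) : hasSumR g s -> (forall N, NoDup (L N)) ->
  (forall x, exists N0, forall N, (N0 <= N)%nat -> In x (L N)) ->
  Un_cv (fun N => lsum g (L N)) s.
Proof. intros H HN Hx eps He. destruct (H (eps/2)) as [l0 [N0 P0]]; [lra|].
  assert (Hincl : exists K, forall N, (K <= N)%nat -> incl l0 (L N)).
  { clear P0 N0. induction l0. exists 0%nat; intros N _ x [].
    destruct IHl0 as [K1 HK1]. destruct (Hx a) as [K2 HK2].
    exists (max K1 K2). intros N HN' x [<-|Hin]. apply HK2; lia. apply (HK1 N); auto; lia. }
  destruct Hincl as [K HK]. exists K. intros n Hn. unfold R_dist.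
  specialize (P0 (L n) (HN n) (HK n ltac:(lia))). lra. Qed.

End RealSums.

Lemma hasSumR_reindex {T U} {ET : EqDec T} {EU : EqDec U}
  (tau : U -> T) (iota : T -> U) (g : T -> R) s :
  (forall x, tau (iota x) = x) -> (forall y, iota (tau y) = y) ->
  hasSumR g s -> hasSumR (fun y => g (tau y)) s.
Proof. intros H1 H2 H eps He. destruct (H eps He) as [l0 [N P]].
  exists (map iota l0). split.
  - apply NoDup_map_injective; auto. intros x y E. rewrite <- (H1 x), <- (H1 y), E; auto.
  - intros l Hl Hi. rewrite <- lsum_map. apply P.
    apply NoDup_map_injective; auto. intros x y E. rewrite <- (H2 x), <- (H2 y), E; auto.
    intros x Hx. apply in_map_iff. exists (iota x); split; auto. apply Hi, in_map; auto. Qed.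

Lemma hasSumR_fubini {T U} {ET : EqDec T} {EU : EqDec U}
  (g : T * U -> R) (G : T -> R) s :
  hasSumR g s -> (forall x, hasSumR (fun y => g (x, y)) (G x)) -> hasSumR G s.
Proof. intros H HG eps He.
  destruct (H (eps/2)) as [l0 [N0 P0]]; [lra|].
  exists (nodup eqd (map fst l0)). split; [apply NoDup_nodup|].
  intros l Hl Hi.
  set (e := eps / (2 * (INR (length l) + 1))).
  assert (He0 : 0 < e) by (unfold e; apply Rdiv_lt_0_compat; [lra|]; pose proof (pos_INR (length l)); lra).
  destruct (common_list (fun x Y => Rabs (lsum (fun y => g (x, y)) Y - G x) <= e) l (map snd l0))
    as [Y [NY [IY PY]]].
  { intros x _. apply (HG x e He0). }
  assert (Hprod : Rabs (lsum g (list_prod l Y) - s) <= eps / 2).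
  { apply P0. apply NoDup_list_prod; auto.
    intros [x y] Hxy. apply in_prod. apply Hi. apply nodup_In. apply in_map_iff; exists (x,y); auto.
    apply IY. apply in_map_iff; exists (x, y); auto. }
  rewrite lsum_list_prod in Hprod.
  assert (Hrows : Rabs (lsum (fun x => lsum (fun y => g (x, y)) Y) l - lsum G l) <= INR (length l) * e).
  { unfold Rminus; rewrite <- (lsum_opp G), <- lsum_plus. eapply Rle_trans; [apply lsum_abs|].
    apply lsum_le_len. intros x Hx. apply PY; auto. apply incl_refl. }
  assert (INR (length l) * e <= eps / 2).
  { unfold e. pose proof (pos_INR (length l)).
    apply (Rmult_le_reg_r (2 * (INR (length l) + 1))); [lra|]. field_simplify; lra. }
  apply Rabs_le_inv in Hprod. apply Rabs_le_inv in Hrows. apply Rabs_le. lra. Qed.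

Section ComplexSums.
Context {T : Type} {ET : EqDec T}.

Definition hasSum (f : T -> C) (s : C) : Prop :=
  hasSumR (fun x => fst (f x)) (fst s) /\ hasSumR (fun x => snd (f x)) (snd s).

Definition bnd (f : T -> C) (M : R) := forall l, NoDup l -> lsum (fun x => cnorm (f x)) l <= M.

Lemma bnd_mono (f : T -> C) M M' : bnd f M -> M <= M' -> bnd f M'.
Proof. intros H Hm l Hl; specialize (H l Hl); lra. Qed.

Lemma bnd_pt (f : T -> C) M x : bnd f M -> cnorm (f x) <= M.
Proof. intros H. specialize (H [x] ltac:(repeat constructor; auto)). rewrite lsum_cons, lsum_nil in H; lra. Qed.

Lemma bnd_ge0 (f : T -> C) M : bnd f M -> 0 <= M.
Proof. intros H. specialize (H [] ltac:(constructor)). rewrite lsum_nil in H; lra. Qed.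

Lemma hasSum_unique f s1 s2 : hasSum f s1 -> hasSum f s2 -> s1 = s2.
Proof. intros [A B] [A' B']. apply C_ext; eapply hasSumR_unique; eauto. Qed.

Lemma hasSum_ext f1 f2 s : (forall x, f1 x = f2 x) -> hasSum f1 s -> hasSum f2 s.
Proof. intros E [A B]; split; eapply hasSumR_ext; eauto; intros; simpl; rewrite E; auto. Qed.

Lemma hasSum_ex f M : bnd f M -> exists s, hasSum f s.
Proof. intros Hb.
  destruct (hasSumR_ex (fun x => fst (f x)) M) as [s1 [H1 _]].
  { intros l Hl; eapply Rle_trans; [|apply (Hb l Hl)]; apply lsum_le; intros; apply cnorm_le_fst. }
  destruct (hasSumR_ex (fun x => snd (f x)) M) as [s2 [H2 _]].
  { intros l Hl; eapply Rle_trans; [|apply (Hb l Hl)]; apply lsum_le; intros; apply cnorm_le_snd. }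
  exists (s1, s2); split; auto. Qed.

Lemma hasSum_add f g s t : hasSum f s -> hasSum g t -> hasSum (fun x => Cadd (f x) (g x)) (Cadd s t).
Proof. intros [A B] [A' B']; split; simpl;
  [apply (hasSumR_add _ _ _ _ A A')|apply (hasSumR_add _ _ _ _ B B')]. Qed.

Lemma hasSum_mulc c f s : hasSum f s -> hasSum (fun x => Cmul c (f x)) (Cmul c s).
Proof. intros [A B]. split.
  - apply (hasSumR_ext (fun x => fst c * fst (f x) + - snd c * snd (f x))).
    intros; unfold Cmul; simpl; ring.
    replace (fst (Cmul c s)) with (fst c * fst s + - snd c * snd s) by (unfold Cmul; simpl; ring).
    apply hasSumR_lin; auto.
  - apply (hasSumR_ext (fun x => fst c * snd (f x) + snd c * fst (f x))).
    intros; unfold Cmul; simpl; ring.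
    replace (snd (Cmul c s)) with (fst c * snd s + snd c * fst s) by (unfold Cmul; simpl; ring).
    apply hasSumR_lin; auto. Qed.

Lemma hasSum_mulc_ext c f g s t : hasSum f s -> (forall x, g x = Cmul c (f x)) -> t = Cmul c s -> hasSum g t.
Proof. intros H Eg ->. eapply hasSum_ext; [|apply hasSum_mulc, H]. intros; rewrite Eg; auto. Qed.

Lemma hasSum_cmul c f s : hasSum f s -> hasSum (fun x => Cmul (f x) c) (Cmul s c).
Proof. intros H. apply (hasSum_mulc_ext c f _ s _ H); intros; Cring. Qed.

Lemma hasSum_scal r f s : hasSum f s -> hasSum (fun x => Cscal r (f x)) (Cscal r s).
Proof. intros H. apply (hasSum_mulc_ext (r, 0) f _ s _ H); intros; Cring. Qed.

Lemma hasSum_opp f s : hasSum f s -> hasSum (fun x => Copp (f x)) (Copp s).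
Proof. intros H. apply (hasSum_mulc_ext (-1, 0) f _ s _ H); intros; Cring. Qed.

Lemma hasSum_zero : hasSum (fun _ => C0) C0.
Proof. split; apply (hasSumR_ext (fun _ => 0)); try (intros; reflexivity); apply hasSumR_zero. Qed.

Lemma hasSum_single f x0 : (forall x, x <> x0 -> f x = C0) -> hasSum f (f x0).
Proof. intros H; split;
  [apply (hasSumR_single (fun x => fst (f x)) x0)|apply (hasSumR_single (fun x => snd (f x)) x0)];
  intros x Hx; rewrite H; auto. Qed.

Lemma hasSum_cnorm_le f s g t : hasSum f s -> hasSumR g t -> (forall x, cnorm (f x) <= g x) -> cnorm s <= t.
Proof. intros [A B] Hg Hle.
  set (e1 := if Rcase_abs (fst s) then -1 else 1). set (e2 := if Rcase_abs (snd s) then -1 else 1).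
  assert (Hsign : forall r, Rabs (if Rcase_abs r then -1 else 1) = 1 /\
                            (if Rcase_abs r then -1 else 1) * r = Rabs r).
  { intros r; unfold Rabs; destruct (Rcase_abs r), (Rcase_abs (-1)), (Rcase_abs 1); split; lra. }
  destruct (Hsign (fst s)) as [Ae1 E1]; destruct (Hsign (snd s)) as [Ae2 E2]. fold e1 in Ae1, E1. fold e2 in Ae2, E2.
  unfold cnorm. rewrite <- E1, <- E2. eapply (hasSumR_mono _ _ _ _ (hasSumR_lin e1 e2 _ _ _ _ A B) Hg).
  intros x. eapply Rle_trans; [|apply Hle]. eapply Rle_trans; [apply Rle_abs|]. unfold cnorm.
  eapply Rle_trans; [apply Rabs_triang|]. rewrite !Rabs_mult, Ae1, Ae2. lra. Qed.

Lemma hasSum_exhaust f s (L : nat -> list T) : hasSum f s -> (forall N, NoDup (L N)) ->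
  (forall x, exists N0, forall N, (N0 <= N)%nat -> In x (L N)) ->
  Ccv (fun N => Csum (map f (L N))) s.
Proof. intros [A B] HN Hx. split.
  - eapply Un_cv_ext; [|apply (hasSumR_exhaust _ _ L A HN Hx)]. intros; simpl; rewrite Csum_fst; auto.
  - eapply Un_cv_ext; [|apply (hasSumR_exhaust _ _ L B HN Hx)]. intros; simpl; rewrite Csum_snd; auto. Qed.

End ComplexSums.

Lemma hasSum_reindex {T U} {ET : EqDec T} {EU : EqDec U} (tau : U -> T) (iota : T -> U) (f : T -> C) s :
  (forall x, tau (iota x) = x) -> (forall y, iota (tau y) = y) ->
  hasSum f s -> hasSum (fun y => f (tau y)) s.
Proof. intros H1 H2 [A B]; split.
  - apply (hasSumR_reindex tau iota (fun x => fst (f x))); auto.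
  - apply (hasSumR_reindex tau iota (fun x => snd (f x))); auto. Qed.

Lemma hasSum_fubini {T U} {ET : EqDec T} {EU : EqDec U} (g : T * U -> C) (G : T -> C) s :
  hasSum g s -> (forall x, hasSum (fun y => g (x, y)) (G x)) -> hasSum G s.
Proof. intros [A B] HG. split.
  - apply (hasSumR_fubini (fun p => fst (g p)) (fun x => fst (G x))); auto. intros x; apply HG.
  - apply (hasSumR_fubini (fun p => snd (g p)) (fun x => snd (G x))); auto. intros x; apply HG. Qed.

Lemma Clim_eq u l : Ccv u l -> Clim u = l.
Proof. intros H. unfold Clim.
  assert (H' : Ccv u (epsilon (inhabits C0) (fun l => Ccv u l))).
  { apply epsilon_spec; exists l; auto. }
  destruct H as [A B], H' as [A' B']. apply C_ext; eapply UL_sequence; eauto. Qed.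

Lemma Ccv_unique u l1 l2 : Ccv u l1 -> Ccv u l2 -> l1 = l2.
Proof. intros H1 H2. rewrite <- (Clim_eq _ _ H1). apply Clim_eq; auto. Qed.

Lemma Ccv_ext u v l : (forall N, u N = v N) -> Ccv u l -> Ccv v l.
Proof. intros E [A B]; split; eapply Un_cv_ext; eauto; intros; simpl; rewrite E; auto. Qed.

Lemma Ccv_const c : Ccv (fun _ => c) c.
Proof. split; intros eps He; exists O; intros; unfold Rdist; rewrite Rminus_diag, Rabs_R0; lra. Qed.

Lemma Ccv_cnorm (u : nat -> C) l :
  (forall eps, 0 < eps -> exists N0, forall N, (N0 <= N)%nat -> cnorm (Csub (u N) l) <= eps) -> Ccv u l.
Proof. intros H; split; intros eps He; destruct (H (eps/2)) as [N0 HN]; try lra; exists N0; intros N HN';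
  unfold R_dist; specialize (HN N HN').
  - pose proof (cnorm_fst_sub (u N) l); lra.
  - pose proof (cnorm_snd_sub (u N) l); lra. Qed.

Lemma Ccv_cnorm_inv (u : nat -> C) l : Ccv u l ->
  forall eps, 0 < eps -> exists N0, forall N, (N0 <= N)%nat -> cnorm (Csub (u N) l) <= eps.
Proof. intros [A B] eps He. destruct (A (eps/2)) as [N1 H1]; [lra|]. destruct (B (eps/2)) as [N2 H2]; [lra|].
  exists (max N1 N2). intros N HN. specialize (H1 N ltac:(lia)); specialize (H2 N ltac:(lia)).
  unfold R_dist in *. unfold cnorm, Csub, Cadd, Copp; simpl. unfold Rminus in *; lra. Qed.

Lemma Ccv_same_limit u v a b :
  Ccv u a -> Ccv v b -> Un_cv (fun N => fst (u N) - fst (v N)) 0 -> Un_cv (fun N => snd (u N) - snd (v N)) 0 ->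
  a = b.
Proof. intros [A1 A2] [B1 B2] D1 D2. apply C_ext; apply Rminus_diag_uniq; eapply UL_sequence;
  [apply (CV_minus _ _ _ _ A1 B1)|apply D1|apply (CV_minus _ _ _ _ A2 B2)|apply D2]. Qed.

#[export] Instance EqDec_Z4 : EqDec Z4.
Proof. intros [a b c d] [a' b' c' d'].
  destruct (Z.eq_dec a a'), (Z.eq_dec b b'), (Z.eq_dec c c'), (Z.eq_dec d d'); subst;
  try (right; intro E; inversion E; contradiction). left; reflexivity. Defined.

Definition Z4add (n m : Z4) : Z4 := mkZ4 (z1 n + z1 m) (z2 n + z2 m) (z3 n + z3 m) (z4 n + z4 m).

Lemma Z4_eta n : n = mkZ4 (z1 n) (z2 n) (z3 n) (z4 n).
Proof. destruct n; reflexivity. Qed.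

Lemma Z4_ext n m : z1 n = z1 m -> z2 n = z2 m -> z3 n = z3 m -> z4 n = z4 m -> n = m.
Proof. destruct n, m; simpl; intros; subst; reflexivity. Qed.

Ltac Z4eq := apply Z4_ext; simpl; lia.

Lemma Z4sub_inj_l m n n' : Z4sub n m = Z4sub n' m -> n = n'.
Proof. intros E. pose proof (f_equal z1 E); pose proof (f_equal z2 E); pose proof (f_equal z3 E);
  pose proof (f_equal z4 E); simpl in *; Z4eq. Qed.

Definition prod4 (L1 L2 L3 L4 : list Z) : list Z4 :=
  flat_map (fun a => flat_map (fun b => flat_map (fun c =>
    map (fun d => mkZ4 a b c d) L4) L3) L2) L1.

Lemma in_prod4 L1 L2 L3 L4 n : In n (prod4 L1 L2 L3 L4) <->
  In (z1 n) L1 /\ In (z2 n) L2 /\ In (z3 n) L3 /\ In (z4 n) L4.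
Proof. unfold prod4. rewrite in_flat_map. split.
  - intros [a [Ha H]]. rewrite in_flat_map in H. destruct H as [b [Hb H]].
    rewrite in_flat_map in H. destruct H as [c [Hc H]]. rewrite in_map_iff in H.
    destruct H as [d [<- Hd]]. simpl; auto.
  - intros [H1 [H2 [H3 H4]]]. exists (z1 n); split; auto. rewrite in_flat_map.
    exists (z2 n); split; auto. rewrite in_flat_map. exists (z3 n); split; auto.
    rewrite in_map_iff. exists (z4 n); split; auto. symmetry; apply Z4_eta. Qed.

Lemma NoDup_prod4 L1 L2 L3 L4 : NoDup L1 -> NoDup L2 -> NoDup L3 -> NoDup L4 -> NoDup (prod4 L1 L2 L3 L4).
Proof. intros N1 N2 N3 N4. unfold prod4.
  apply NoDup_flat_map_disjoint; auto.
  - intros a _. apply NoDup_flat_map_disjoint; auto.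
    + intros b _. apply NoDup_flat_map_disjoint; auto.
      * intros c _. apply NoDup_map_injective; auto. intros x y E; inversion E; auto.
      * intros x y z _ _ Hxy Hx Hy. apply in_map_iff in Hx as [d [<- _]].
        apply in_map_iff in Hy as [d' [E _]]. inversion E; auto.
    + intros x y z _ _ Hxy Hx Hy. apply in_flat_map in Hx as [c [_ Hx]].
      apply in_map_iff in Hx as [d [<- _]].
      apply in_flat_map in Hy as [c' [_ Hy]]. apply in_map_iff in Hy as [d' [E _]]. inversion E; auto.
  - intros x y z _ _ Hxy Hx Hy. apply in_flat_map in Hx as [b [_ Hx]].
    apply in_flat_map in Hx as [c [_ Hx]]. apply in_map_iff in Hx as [d [<- _]].
    apply in_flat_map in Hy as [b' [_ Hy]].
    apply in_flat_map in Hy as [c' [_ Hy]]. apply in_map_iff in Hy as [d' [E _]]. inversion E; auto. Qed.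

Lemma in_zrange N z : In z (zrange N) <-> (- Z.of_nat N <= z <= Z.of_nat N)%Z.
Proof. unfold zrange. rewrite in_map_iff. split.
  - intros [k [<- Hk]]. apply in_seq in Hk. lia.
  - intros H. exists (Z.to_nat (z + Z.of_nat N)). split. lia. apply in_seq. lia. Qed.

Lemma NoDup_zrange N : NoDup (zrange N).
Proof. unfold zrange. apply NoDup_map_injective. intros x y E; lia. apply seq_NoDup. Qed.

Lemma NoDup_box N : NoDup (box N).
Proof. apply (NoDup_prod4 (zrange N) (zrange N) (zrange N) (zrange N)); apply NoDup_zrange. Qed.

Lemma box_exhaust n : exists N0, forall N, (N0 <= N)%nat -> In n (box N).
Proof. exists (Z.to_nat (Z.abs (z1 n) + Z.abs (z2 n) + Z.abs (z3 n) + Z.abs (z4 n))).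
  intros N HN. change (In n (prod4 (zrange N) (zrange N) (zrange N) (zrange N))).
  rewrite in_prod4, !in_zrange. lia. Qed.

Lemma box_Clim f s : hasSum f s -> Clim (fun N => Csum (map f (box N))) = s.
Proof. intros H. apply Clim_eq, hasSum_exhaust; auto. apply NoDup_box. apply box_exhaust. Qed.

(** * The Banach algebra l^1(Z^4) with the twisted convolution *)

Definition L1 (a : NCT) := exists M, bnd a M.

Lemma bnd_add (a b : NCT) Ma Mb : bnd a Ma -> bnd b Mb -> bnd (add a b) (Ma + Mb).
Proof. intros Ha Hb l Hl. apply Rle_trans with (lsum (fun n => cnorm (a n) + cnorm (b n)) l).
  apply lsum_le; intros; apply cnorm_add.
  rewrite lsum_plus; pose proof (Ha l Hl); pose proof (Hb l Hl); lra. Qed.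
Lemma bnd_opp (a : NCT) Ma : bnd a Ma -> bnd (opp a) Ma.
Proof. intros Ha l Hl. unfold opp. rewrite (lsum_ext _ (fun n => cnorm (a n))) by (intros; apply cnorm_opp). auto. Qed.
Lemma bnd_sub (a b : NCT) Ma Mb : bnd a Ma -> bnd b Mb -> bnd (sub a b) (Ma + Mb).
Proof. intros; apply bnd_add; auto; apply bnd_opp; auto. Qed.
Lemma bnd_sub_sym (a b : NCT) M : bnd (sub a b) M -> bnd (sub b a) M.
Proof. intros H l Hl. rewrite (lsum_ext _ (fun n => cnorm (sub a b n))). apply H; auto.
  intros; unfold sub, add, opp. apply (cnorm_sub_sym (b x) (a x)). Qed.
Lemma bnd_scal (a : NCT) r Ma : bnd a Ma -> bnd (scal r a) (Rabs r * Ma).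
Proof. intros Ha l Hl. unfold scal. rewrite (lsum_ext _ (fun n => Rabs r * cnorm (a n))) by (intros; apply cnorm_scal).
  rewrite lsum_scal. apply Rmult_le_compat_l; [apply Rabs_pos|auto]. Qed.
Lemma bnd_zero : bnd (fun _ : Z4 => C0) 0.
Proof. intros l Hl. rewrite (lsum_ext _ (fun _ => 0)) by (intros; apply cnorm_C0). rewrite lsum_const0; lra. Qed.

Lemma bnd_Csum {I} (w : I -> NCT) (b : I -> R) (L : list I) : (forall k, In k L -> bnd (w k) (b k)) ->
  bnd (fun n => Csum (map (fun k => w k n) L)) (lsum b L).
Proof. intros H l Hl.
  apply Rle_trans with (lsum (fun n => lsum (fun k => cnorm (w k n)) L) l).
  { apply lsum_le; intros; apply cnorm_Csum. }
  rewrite lsum_swap. apply lsum_le. intros k Hk. apply H; auto. Qed.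

Lemma lsum_shift (g : Z4 -> R) l m M : NoDup l -> (forall L, NoDup L -> lsum g L <= M) ->
  lsum (fun n => g (Z4sub n m)) l <= M.
Proof. intros Hl H. rewrite <- (lsum_map g). apply H. apply NoDup_map_injective; auto.
  intros x y E; apply (Z4sub_inj_l m); auto. Qed.

(* A chosen unconditional sum of a real family (meaningful when one exists). *)
Definition sumR {T} (g : T -> R) : R := epsilon (inhabits 0) (fun s => hasSumR g s).
Lemma sumR_spec {T} {ET : EqDec T} (g : T -> R) : (exists s, hasSumR g s) -> hasSumR g (sumR g).
Proof. intros H; unfold sumR; apply epsilon_spec; auto. Qed.

Section TwistedConvolution.
Variable theta : nat -> nat -> R.
Notation ph := (phase theta).
Notation mul := (mul theta).

Definition conv_term (a b : NCT) (n m : Z4) : C := Cmul (Cmul (a m) (b (Z4sub n m))) (ph m (Z4sub n m)).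

Lemma cnorm_phase m k : cnorm (ph m k) <= 2.
Proof. apply cnorm_Cexpi. Qed.

Lemma cnorm_conv_term a b n m : cnorm (conv_term a b n m) <= 2 * (cnorm (a m) * cnorm (b (Z4sub n m))).
Proof. unfold conv_term. eapply Rle_trans; [apply cnorm_mul3|].
  pose proof (cnorm_phase m (Z4sub n m)).
  pose proof (Rmult_le_pos _ _ (cnorm_ge0 (a m)) (cnorm_ge0 (b (Z4sub n m)))). nra. Qed.

Lemma lsum_prod_bnd a b Ma Mb n L : bnd a Ma -> bnd b Mb -> NoDup L ->
  lsum (fun m => cnorm (a m) * cnorm (b (Z4sub n m))) L <= Ma * Mb.
Proof. intros Ha Hb HL.
  apply Rle_trans with (lsum (fun m => Mb * cnorm (a m)) L).
  { apply lsum_le; intros m _. pose proof (bnd_pt b Mb (Z4sub n m) Hb); pose proof (cnorm_ge0 (a m)). nra. }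
  rewrite lsum_scal. pose proof (Ha L HL). pose proof (bnd_ge0 b Mb Hb).
  rewrite Rmult_comm. apply Rmult_le_compat_r; lra. Qed.

Lemma conv_term_bnd a b Ma Mb n : bnd a Ma -> bnd b Mb -> bnd (conv_term a b n) (2 * Ma * Mb).
Proof. intros Ha Hb l Hl.
  apply Rle_trans with (lsum (fun m => 2 * (cnorm (a m) * cnorm (b (Z4sub n m)))) l).
  { apply lsum_le; intros m _. apply cnorm_conv_term. }
  rewrite lsum_scal. pose proof (lsum_prod_bnd a b Ma Mb n l Ha Hb Hl). lra. Qed.

Lemma mul_hasSum a b Ma Mb n : bnd a Ma -> bnd b Mb -> hasSum (conv_term a b n) (mul a b n).
Proof. intros Ha Hb. destruct (hasSum_ex _ _ (conv_term_bnd a b Ma Mb n Ha Hb)) as [s Hs].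
  unfold Defs.mul. fold (conv_term a b n). rewrite (box_Clim _ _ Hs). auto. Qed.

Lemma mul_eq a b Ma Mb n s : bnd a Ma -> bnd b Mb -> hasSum (conv_term a b n) s -> mul a b n = s.
Proof. intros Ha Hb H. eapply hasSum_unique; [apply (mul_hasSum a b Ma Mb n Ha Hb)|auto]. Qed.

(* |a b|_1 <= 2 |a|_1 |b|_1 (the factor 2 comes from the norm cnorm of the phases). *)
Lemma mul_bnd a b Ma Mb : bnd a Ma -> bnd b Mb -> bnd (mul a b) (2 * Ma * Mb).
Proof. intros Ha Hb l Hl.
  set (g := fun n m => 2 * (cnorm (a m) * cnorm (b (Z4sub n m)))).
  assert (Hg0 : forall n m, 0 <= g n m).
  { intros; unfold g. pose proof (cnorm_ge0 (a m)); pose proof (cnorm_ge0 (b (Z4sub n m))). nra. }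
  assert (Hg : forall n, hasSumR (g n) (sumR (g n))).
  { intros n. apply sumR_spec. destruct (hasSumR_ex (g n) (2 * Ma * Mb)) as [s [Hs _]]; eauto.
    intros L HL. rewrite (lsum_ext _ (g n)) by (intros; rewrite Rabs_right; auto; apply Rle_ge; auto).
    unfold g; rewrite lsum_scal. pose proof (lsum_prod_bnd a b Ma Mb n L Ha Hb HL). lra. }
  apply Rle_trans with (lsum (fun n => sumR (g n)) l).
  { apply lsum_le; intros n _. eapply hasSum_cnorm_le; [apply (mul_hasSum a b Ma Mb n Ha Hb)|apply Hg|].
    intros; apply cnorm_conv_term. }
  pose proof (hasSumR_lsum g (fun n => sumR (g n)) l (fun i _ => Hg i)) as H.
  eapply Rle_trans; [apply Rle_abs|]. eapply hasSumR_bound; [apply H|].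
  intros L HL. rewrite (lsum_ext _ (fun m => lsum (fun n => g n m) l)).
  2: { intros; rewrite Rabs_right; auto. apply Rle_ge, lsum_ge0; auto. }
  apply Rle_trans with (lsum (fun m => 2 * Mb * cnorm (a m)) L).
  { apply lsum_le; intros m _. unfold g.
    rewrite (lsum_ext _ (fun n => (2 * cnorm (a m)) * cnorm (b (Z4sub n m)))) by (intros; ring).
    rewrite lsum_scal. pose proof (lsum_shift (fun n => cnorm (b n)) l m Mb Hl Hb).
    pose proof (cnorm_ge0 (a m)). nra. }
  rewrite lsum_scal. pose proof (Ha L HL). pose proof (bnd_ge0 b Mb Hb).
  replace (2 * Ma * Mb) with (2 * Mb * Ma) by ring. apply Rmult_le_compat_l; lra. Qed.

Lemma mul_add_l a a' b Ma Ma' Mb : bnd a Ma -> bnd a' Ma' -> bnd b Mb ->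
  mul (add a a') b = add (mul a b) (mul a' b).
Proof. intros Ha Ha' Hb. apply functional_extensionality; intros n.
  eapply mul_eq; [apply (bnd_add _ _ _ _ Ha Ha')|apply Hb|].
  eapply hasSum_ext; [|apply hasSum_add; [apply (mul_hasSum a b Ma Mb n Ha Hb)|apply (mul_hasSum a' b Ma' Mb n Ha' Hb)]].
  intros; unfold conv_term, add; Cring. Qed.
Lemma mul_add_r a b b' Ma Mb Mb' : bnd a Ma -> bnd b Mb -> bnd b' Mb' ->
  mul a (add b b') = add (mul a b) (mul a b').
Proof. intros Ha Hb Hb'. apply functional_extensionality; intros n.
  eapply mul_eq; [apply Ha|apply (bnd_add _ _ _ _ Hb Hb')|].
  eapply hasSum_ext; [|apply hasSum_add; [apply (mul_hasSum a b Ma Mb n Ha Hb)|apply (mul_hasSum a b' Ma Mb' n Ha Hb')]].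
  intros; unfold conv_term, add; Cring. Qed.
Lemma mul_scal_l r a b Ma Mb : bnd a Ma -> bnd b Mb -> mul (scal r a) b = scal r (mul a b).
Proof. intros Ha Hb. apply functional_extensionality; intros n.
  eapply mul_eq; [apply (bnd_scal _ r _ Ha)|apply Hb|].
  eapply hasSum_ext; [|apply hasSum_scal; apply (mul_hasSum a b Ma Mb n Ha Hb)].
  intros; unfold conv_term, scal; Cring. Qed.
Lemma mul_scal_r r a b Ma Mb : bnd a Ma -> bnd b Mb -> mul a (scal r b) = scal r (mul a b).
Proof. intros Ha Hb. apply functional_extensionality; intros n.
  eapply mul_eq; [apply Ha|apply (bnd_scal _ r _ Hb)|].
  eapply hasSum_ext; [|apply hasSum_scal; apply (mul_hasSum a b Ma Mb n Ha Hb)].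
  intros; unfold conv_term, scal; Cring. Qed.
Lemma mul_opp_l a b Ma Mb : bnd a Ma -> bnd b Mb -> mul (opp a) b = opp (mul a b).
Proof. intros Ha Hb. apply functional_extensionality; intros n.
  eapply mul_eq; [apply (bnd_opp _ _ Ha)|apply Hb|].
  eapply hasSum_ext; [|apply hasSum_opp; apply (mul_hasSum a b Ma Mb n Ha Hb)].
  intros; unfold conv_term, opp; Cring. Qed.
Lemma mul_opp_r a b Ma Mb : bnd a Ma -> bnd b Mb -> mul a (opp b) = opp (mul a b).
Proof. intros Ha Hb. apply functional_extensionality; intros n.
  eapply mul_eq; [apply Ha|apply (bnd_opp _ _ Hb)|].
  eapply hasSum_ext; [|apply hasSum_opp; apply (mul_hasSum a b Ma Mb n Ha Hb)].
  intros; unfold conv_term, opp; Cring. Qed.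
Lemma mul_zero_l b Mb : bnd b Mb -> mul (fun _ => C0) b = (fun _ => C0).
Proof. intros Hb. apply functional_extensionality; intros n.
  eapply mul_eq; [apply bnd_zero|apply Hb|]. eapply hasSum_ext; [|apply hasSum_zero]. intros; unfold conv_term; Cring. Qed.
Lemma mul_zero_r a Ma : bnd a Ma -> mul a (fun _ => C0) = (fun _ => C0).
Proof. intros Ha. apply functional_extensionality; intros n.
  eapply mul_eq; [apply Ha|apply bnd_zero|]. eapply hasSum_ext; [|apply hasSum_zero]. intros; unfold conv_term; Cring. Qed.

(* The phases form a 2-cocycle (the exponent is bilinear), which gives associativity. *)
Lemma phase_assoc n k m : Cmul (ph m (Z4sub k m)) (ph k (Z4sub n k)) =
  Cmul (ph (Z4sub k m) (Z4sub n k)) (ph m (Z4sub n m)).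
Proof. unfold phase. rewrite <- !Cexpi_add. f_equal. unfold pairs4; simpl. rewrite !minus_IZR. ring. Qed.

(* The phase of (-m, m) equals that of (m, -m); this gives the trace property. *)
Lemma phase_opp m : ph (Z4opp m) m = ph m (Z4opp m).
Proof. unfold phase. f_equal. unfold pairs4; simpl. rewrite !opp_IZR. ring. Qed.

Lemma phase_zero_r m : ph m Z4zero = C1.
Proof. unfold phase. rewrite <- Cexpi_0. f_equal. unfold pairs4; simpl. ring. Qed.
Lemma phase_zero_l m : ph Z4zero m = C1.
Proof. unfold phase. rewrite <- Cexpi_0. f_equal. unfold pairs4; simpl. ring. Qed.

Lemma one_spec x : one x = if eqd x Z4zero then C1 else C0.
Proof. unfold one. destruct (eqd x Z4zero) as [->|Hn]; [reflexivity|].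
  destruct x as [a b c d]; simpl.
  destruct (Z.eqb_spec a 0), (Z.eqb_spec b 0), (Z.eqb_spec c 0), (Z.eqb_spec d 0); simpl; auto.
  subst; exfalso; apply Hn; reflexivity. Qed.

Lemma bnd_one : bnd one 1.
Proof. intros l Hl. destruct (in_dec eqd Z4zero l) as [Hi|Hi].
  - rewrite (lsum_single _ Z4zero l Hl Hi). rewrite one_spec; destruct (eqd Z4zero Z4zero); [|congruence].
    unfold cnorm, C1; simpl; rewrite Rabs_R1, Rabs_R0; lra.
    intros x Hx; rewrite one_spec; destruct (eqd x Z4zero); [contradiction|apply cnorm_C0].
  - rewrite (lsum_ext _ (fun _ => 0)). rewrite lsum_const0; lra.
    intros x Hx; rewrite one_spec; destruct (eqd x Z4zero); [subst; contradiction|apply cnorm_C0]. Qed.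

Lemma mul_one_r a Ma : bnd a Ma -> mul a one = a.
Proof. intros Ha. apply functional_extensionality; intros n.
  eapply mul_eq; [apply Ha|apply bnd_one|].
  replace (a n) with (conv_term a one n n).
  - apply hasSum_single. intros m Hm. unfold conv_term. rewrite one_spec.
    destruct (eqd (Z4sub n m) Z4zero) as [E|].
    + exfalso; apply Hm. apply (Z4sub_inj_l m). rewrite E. Z4eq.
    + Cring.
  - unfold conv_term. replace (Z4sub n n) with Z4zero by Z4eq.
    rewrite phase_zero_r, one_spec. destruct (eqd Z4zero Z4zero); [|congruence]. Cring. Qed.

Lemma mul_one_l a Ma : bnd a Ma -> mul one a = a.
Proof. intros Ha. apply functional_extensionality; intros n.
  eapply mul_eq; [apply bnd_one|apply Ha|].
  replace (a n) with (conv_term one a n Z4zero).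
  - apply hasSum_single. intros m Hm. unfold conv_term. rewrite one_spec.
    destruct (eqd m Z4zero) as [E|]; [contradiction|]. Cring.
  - unfold conv_term. replace (Z4sub n Z4zero) with n by Z4eq.
    rewrite phase_zero_l, one_spec. destruct (eqd Z4zero Z4zero); [|congruence]. Cring. Qed.

(* The trace property phi0 (a b) = phi0 (b a): reindex the convolution sum by m |-> -m. *)
Lemma phi0_comm a b Ma Mb : bnd a Ma -> bnd b Mb -> phi0 (mul a b) = phi0 (mul b a).
Proof. intros Ha Hb. unfold phi0. symmetry. eapply mul_eq; [apply Hb|apply Ha|].
  assert (Hi : forall y, Z4opp (Z4opp y) = y) by (intros; Z4eq).
  eapply hasSum_ext; [|apply (hasSum_reindex Z4opp Z4opp _ _ Hi Hi (mul_hasSum a b Ma Mb Z4zero Ha Hb))].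
  intros m. unfold conv_term.
  replace (Z4sub Z4zero (Z4opp m)) with m by Z4eq.
  replace (Z4sub Z4zero m) with (Z4opp m) by Z4eq. rewrite phase_opp. Cring. Qed.

(* The summand of the double sum expressing ((a b) c)(n) and (a (b c))(n). *)
Definition assoc_kernel (a b c : NCT) (n : Z4) (p : Z4 * Z4) : C :=
  Cmul (Cmul (a (fst p)) (conv_term b c (Z4sub n (fst p)) (snd p))) (ph (fst p) (Z4sub n (fst p))).

Lemma assoc_kernel_bnd a b c Ma Mb Mc n : bnd a Ma -> bnd b Mb -> bnd c Mc ->
  bnd (assoc_kernel a b c n) (4 * Mc * (Ma * Mb)).
Proof. intros Ha Hb Hc l Hl.
  set (L1 := nodup eqd (map fst l)). set (L2 := nodup eqd (map snd l)).
  apply Rle_trans with (lsum (fun p => cnorm (assoc_kernel a b c n p)) (list_prod L1 L2)).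
  { apply lsum_incl_le; [intros; apply cnorm_ge0|auto|apply NoDup_list_prod; apply NoDup_nodup|].
    intros [x y] Hxy. apply in_prod; apply nodup_In; apply in_map_iff; [exists (x,y)|exists (x,y)]; auto. }
  rewrite lsum_list_prod.
  assert (Hc0 : 0 <= Mc) by (eapply bnd_ge0; eauto).
  apply Rle_trans with (lsum (fun m => lsum (fun j => 4 * Mc * cnorm (a m) * cnorm (b j)) L2) L1).
  { apply lsum_le; intros m _; apply lsum_le; intros j _. unfold assoc_kernel; simpl.
    eapply Rle_trans; [apply cnorm_mul3|].
    pose proof (cnorm_conv_term b c (Z4sub n m) j) as Hbc.
    pose proof (bnd_pt c Mc (Z4sub (Z4sub n m) j) Hc).
    pose proof (cnorm_ge0 (a m)); pose proof (cnorm_ge0 (b j)).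
    pose proof (cnorm_ge0 (c (Z4sub (Z4sub n m) j))).
    pose proof (cnorm_phase m (Z4sub n m)).
    assert (cnorm (conv_term b c (Z4sub n m) j) <= 2 * (cnorm (b j) * Mc)).
    { eapply Rle_trans; [apply Hbc|]. apply Rmult_le_compat_l; [lra|]. apply Rmult_le_compat_l; auto. }
    apply Rle_trans with (cnorm (a m) * (2 * (cnorm (b j) * Mc)) * 2); [|lra].
    apply Rmult_le_compat; [apply Rmult_le_pos; auto; apply cnorm_ge0|apply cnorm_ge0|
      apply Rmult_le_compat_l; auto|auto]. }
  rewrite (lsum_ext _ (fun m => (4 * Mc * cnorm (a m)) * lsum (fun j => cnorm (b j)) L2)).
  2: { intros; rewrite <- lsum_scal; apply lsum_ext; intros; ring. }
  pose proof (Hb L2 (NoDup_nodup _ _)). pose proof (bnd_ge0 b Mb Hb).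
  apply Rle_trans with (lsum (fun m => 4 * Mc * Mb * cnorm (a m)) L1).
  { apply lsum_le; intros m _. pose proof (cnorm_ge0 (a m)).
    replace (4 * Mc * Mb * cnorm (a m)) with ((4 * Mc * cnorm (a m)) * Mb) by ring.
    apply Rmult_le_compat_l; auto. nra. }
  rewrite lsum_scal. pose proof (Ha L1 (NoDup_nodup _ _)).
  replace (4 * Mc * (Ma * Mb)) with (4 * Mc * Mb * Ma) by ring. apply Rmult_le_compat_l; nra. Qed.

(* Associativity: both sides are iterated sums of the summable assoc_kernel, related
   by the change of variables (m, j) |-> (m + j, m) and the cocycle identity. *)
Lemma mul_assoc a b c Ma Mb Mc : bnd a Ma -> bnd b Mb -> bnd c Mc ->
  mul (mul a b) c = mul a (mul b c).
Proof. intros Ha Hb Hc. apply functional_extensionality; intros n.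
  set (F2 := assoc_kernel a b c n).
  destruct (hasSum_ex _ _ (assoc_kernel_bnd a b c Ma Mb Mc n Ha Hb Hc)) as [sg Hsg].
  assert (HR : mul a (mul b c) n = sg).
  { eapply mul_eq; [apply Ha|apply (mul_bnd b c Mb Mc Hb Hc)|].
    apply (hasSum_fubini F2); auto. intros m.
    eapply hasSum_ext; [|apply hasSum_cmul, hasSum_mulc, (mul_hasSum b c Mb Mc (Z4sub n m) Hb Hc)].
    intros; reflexivity. }
  rewrite HR. eapply mul_eq; [apply (mul_bnd a b Ma Mb Ha Hb)|apply Hc|].
  set (F1 := fun p : Z4 * Z4 => F2 (snd p, Z4sub (fst p) (snd p))).
  assert (HF1 : hasSum F1 sg).
  { apply (hasSum_reindex (fun p : Z4 * Z4 => (snd p, Z4sub (fst p) (snd p)))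
      (fun p : Z4 * Z4 => (Z4add (fst p) (snd p), fst p))); auto.
    - intros [x y]; simpl; f_equal; Z4eq.
    - intros [x y]; simpl; f_equal; Z4eq. }
  apply (hasSum_fubini F1); auto. intros k.
  eapply hasSum_ext; [|apply hasSum_cmul, hasSum_cmul, (mul_hasSum a b Ma Mb k Ha Hb)].
  intros m. unfold F1, F2, assoc_kernel, conv_term; simpl.
  replace (Z4sub (Z4sub n m) (Z4sub k m)) with (Z4sub n k) by Z4eq.
  transitivity (Cmul (Cmul (Cmul (a m) (b (Z4sub k m))) (c (Z4sub n k)))
    (Cmul (ph m (Z4sub k m)) (ph k (Z4sub n k)))); [Cring|].
  rewrite phase_assoc. Cring. Qed.

End TwistedConvolution.

Section L1Algebra.
Variable theta : nat -> nat -> R.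
Notation mul := (mul theta).

Lemma L1_add a b : L1 a -> L1 b -> L1 (add a b).
Proof. intros [Ma Ha] [Mb Hb]; eexists; apply bnd_add; eauto. Qed.
Lemma L1_sub a b : L1 a -> L1 b -> L1 (sub a b).
Proof. intros [Ma Ha] [Mb Hb]; eexists; apply bnd_sub; eauto. Qed.
Lemma L1_scal r a : L1 a -> L1 (scal r a).
Proof. intros [Ma Ha]; eexists; apply bnd_scal; eauto. Qed.
Lemma L1_mul a b : L1 a -> L1 b -> L1 (mul a b).
Proof. intros [Ma Ha] [Mb Hb]; eexists; apply mul_bnd; eauto. Qed.
Lemma L1_one : L1 one.
Proof. eexists; apply bnd_one. Qed.
Lemma L1_zero : L1 (fun _ => C0).
Proof. eexists; apply bnd_zero. Qed.

Lemma mulA a b c : L1 a -> L1 b -> L1 c -> mul (mul a b) c = mul a (mul b c).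
Proof. intros [Ma Ha] [Mb Hb] [Mc Hc]; eapply mul_assoc; eauto. Qed.
Lemma mul_subR a b c : L1 a -> L1 b -> L1 c -> mul a (sub b c) = sub (mul a b) (mul a c).
Proof. intros [Ma Ha] [Mb Hb] [Mc Hc]. unfold sub.
  erewrite mul_add_r, mul_opp_r; eauto. apply bnd_opp; eauto. Qed.
Lemma mul_subL a b c : L1 a -> L1 b -> L1 c -> mul (sub a b) c = sub (mul a c) (mul b c).
Proof. intros [Ma Ha] [Mb Hb] [Mc Hc]. unfold sub.
  erewrite mul_add_l, mul_opp_l; eauto. apply bnd_opp; eauto. Qed.
Lemma mul_addR a b c : L1 a -> L1 b -> L1 c -> mul a (add b c) = add (mul a b) (mul a c).
Proof. intros [Ma Ha] [Mb Hb] [Mc Hc]; eapply mul_add_r; eauto. Qed.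
Lemma mul_addL a b c : L1 a -> L1 b -> L1 c -> mul (add a b) c = add (mul a c) (mul b c).
Proof. intros [Ma Ha] [Mb Hb] [Mc Hc]; eapply mul_add_l; eauto. Qed.
Lemma mul_scalR r a b : L1 a -> L1 b -> mul a (scal r b) = scal r (mul a b).
Proof. intros [Ma Ha] [Mb Hb]; eapply mul_scal_r; eauto. Qed.
Lemma mul_scalL r a b : L1 a -> L1 b -> mul (scal r a) b = scal r (mul a b).
Proof. intros [Ma Ha] [Mb Hb]; eapply mul_scal_l; eauto. Qed.
Lemma mul_0L b : L1 b -> mul (fun _ => C0) b = (fun _ => C0).
Proof. intros [Mb Hb]; eapply mul_zero_l; eauto. Qed.
Lemma mul_0R a : L1 a -> mul a (fun _ => C0) = (fun _ => C0).
Proof. intros [Ma Ha]; eapply mul_zero_r; eauto. Qed.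
Lemma phi0_mulC a b : L1 a -> L1 b -> phi0 (mul a b) = phi0 (mul b a).
Proof. intros [Ma Ha] [Mb Hb]; eapply phi0_comm; eauto. Qed.

Lemma L1_Csum {I} (c : I -> R) (v : I -> NCT) L : (forall k, L1 (v k)) ->
  L1 (fun n => Csum (map (fun k => Cscal (c k) (v k n)) L)).
Proof. intros Hv. induction L; simpl. apply L1_zero.
  apply (L1_add (scal (c a) (v a))); auto. apply L1_scal; auto. Qed.

Lemma mul_Csum_r {I} e (c : I -> R) (v : I -> NCT) L : L1 e -> (forall k, L1 (v k)) ->
  mul e (fun n => Csum (map (fun k => Cscal (c k) (v k n)) L)) =
  (fun n => Csum (map (fun k => Cscal (c k) (mul e (v k) n)) L)).
Proof. intros He Hv. induction L; simpl. apply mul_0R; auto.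
  change (fun n => Cadd (Cscal (c a) (v a n)) (Csum (map (fun k => Cscal (c k) (v k n)) L)))
    with (add (scal (c a) (v a)) (fun n => Csum (map (fun k => Cscal (c k) (v k n)) L))).
  rewrite mul_addR, mul_scalR, IHL; auto. apply L1_scal; auto. apply L1_Csum; auto. Qed.

Lemma mul_Csum_l {I} e (c : I -> R) (v : I -> NCT) L : L1 e -> (forall k, L1 (v k)) ->
  mul (fun n => Csum (map (fun k => Cscal (c k) (v k n)) L)) e =
  (fun n => Csum (map (fun k => Cscal (c k) (mul (v k) e n)) L)).
Proof. intros He Hv. induction L; simpl. apply mul_0L; auto.
  change (fun n => Cadd (Cscal (c a) (v a n)) (Csum (map (fun k => Cscal (c k) (v k n)) L)))
    with (add (scal (c a) (v a)) (fun n => Csum (map (fun k => Cscal (c k) (v k n)) L))).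
  rewrite mul_addL, mul_scalL, IHL; auto. apply L1_scal; auto. apply L1_Csum; auto. Qed.

(** * The derivation nabla = [., h] and the trace *)

Lemma L1_nabla h a : L1 h -> L1 a -> L1 (nabla theta h a).
Proof. intros; unfold nabla; apply L1_sub; apply L1_mul; auto. Qed.
Lemma L1_iter h a j : L1 h -> L1 a -> L1 (Nat.iter j (nabla theta h) a).
Proof. intros Hh Ha; induction j; simpl; auto. apply L1_nabla; auto. Qed.

Lemma bnd_nabla h a Mh Ma : bnd h Mh -> bnd a Ma -> bnd (nabla theta h a) (4 * Mh * Ma).
Proof. intros Hh Ha. unfold nabla. eapply bnd_mono; [apply bnd_sub; apply mul_bnd; eauto|]. lra. Qed.
Lemma bnd_iter h a Mh Ma j : bnd h Mh -> bnd a Ma -> bnd (Nat.iter j (nabla theta h) a) ((4 * Mh) ^ j * Ma).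
Proof. intros Hh Ha; induction j; simpl. eapply bnd_mono; eauto; lra.
  eapply bnd_mono; [apply bnd_nabla; eauto|]. lra. Qed.

Lemma phi0_nabla h y z : L1 h -> L1 y -> L1 z ->
  phi0 (mul y (nabla theta h z)) = Copp (phi0 (mul (nabla theta h y) z)).
Proof. intros Hh Hy Hz. unfold nabla.
  rewrite mul_subR, mul_subL by (auto; apply L1_mul; auto).
  change (phi0 (sub ?f ?g)) with (Csub (phi0 f) (phi0 g)).
  rewrite <- (mulA y z h), <- (mulA y h z) by auto.
  rewrite (phi0_mulC (mul y z) h) by (auto; apply L1_mul; auto).
  rewrite <- (mulA h y z) by auto.
  unfold Csub; Cring. Qed.

Lemma phi0_iter h y z k : L1 h -> L1 y -> L1 z ->
  phi0 (mul y (Nat.iter k (nabla theta h) z)) = Cscal ((-1) ^ k) (phi0 (mul (Nat.iter k (nabla theta h) y) z)).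
Proof. intros Hh Hy Hz. revert y Hy; induction k; intros y Hy.
  - simpl. unfold Cscal; apply C_ext; simpl; ring.
  - simpl Nat.iter at 1. rewrite phi0_nabla by (auto; apply L1_iter; auto).
    rewrite IHk by (apply L1_nabla; auto). rewrite <- Nat.iter_succ_r.
    apply C_ext; unfold Copp, Cscal; simpl; ring. Qed.

Lemma nabla_comm h e w : L1 h -> L1 e -> L1 w -> mul e h = mul h e ->
  nabla theta h (mul e w) = mul e (nabla theta h w).
Proof. intros Hh He Hw Hc. unfold nabla.
  rewrite mul_subR by (auto; apply L1_mul; auto). rewrite (mulA e w h) by auto.
  rewrite <- (mulA h e w) by auto. rewrite <- Hc. rewrite (mulA e h w) by auto. reflexivity. Qed.

Lemma iter_comm h e w j : L1 h -> L1 e -> L1 w -> mul e h = mul h e ->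
  Nat.iter j (nabla theta h) (mul e w) = mul e (Nat.iter j (nabla theta h) w).
Proof. intros Hh He Hw Hc; induction j; simpl; auto.
  rewrite IHj. apply nabla_comm; auto. apply L1_iter; auto. Qed.

Lemma nabla_self h e : mul e h = mul h e -> nabla theta h e = (fun _ => C0).
Proof. intros Hc. unfold nabla. rewrite Hc. apply functional_extensionality; intros; unfold sub, add, opp; Cring. Qed.

Lemma phi0_comm_iter h e X j : L1 h -> L1 e -> L1 X -> mul e h = mul h e ->
  phi0 (mul e (Nat.iter (S j) (nabla theta h) X)) = C0.
Proof. intros Hh He HX Hc. simpl Nat.iter.
  rewrite phi0_nabla by (auto; apply L1_iter; auto). rewrite nabla_self by auto.
  rewrite mul_0L by (apply L1_iter; auto). unfold phi0, Copp, C0; apply C_ext; simpl; ring. Qed.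

Lemma trace_nabla_product h e a a' j k : L1 h -> L1 e -> L1 a -> L1 a' -> mul e h = mul h e ->
  phi0 (mul e (mul (Nat.iter j (nabla theta h) a) (Nat.iter k (nabla theta h) a'))) =
  Cscal ((-1) ^ k) (phi0 (mul (Nat.iter (j + k) (nabla theta h) (mul e a)) a')).
Proof. intros Hh He Ha Ha' Hc.
  rewrite <- (mulA e _ _ He (L1_iter h a j Hh Ha) (L1_iter h a' k Hh Ha')).
  rewrite <- (iter_comm h e a j Hh He Ha Hc).
  rewrite (phi0_iter h _ a' k Hh (L1_iter h _ j Hh (L1_mul e a He Ha)) Ha').
  rewrite <- Nat.iter_add, Nat.add_comm. reflexivity. Qed.

End L1Algebra.

(** * Completeness of l^1 and convergent series *)

Definition l1_converges (u : nat -> NCT) (a : NCT) :=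
  forall eps, 0 < eps -> exists N0, forall N, (N0 <= N)%nat -> bnd (sub (u N) a) eps.

Definition l1_cauchy (P : nat -> NCT) :=
  forall eps, 0 < eps -> exists N0, forall N M, (N0 <= N)%nat -> (N0 <= M)%nat -> bnd (sub (P N) (P M)) eps.

Definition pointwise_lim (P : nat -> NCT) : NCT := fun n => Clim (fun N => P N n).

Lemma l1_cauchy_pointwise P : l1_cauchy P -> forall n, Ccv (fun N => P N n) (pointwise_lim P n).
Proof. intros HC n.
  assert (Hcomp : forall pr : C -> R, (forall x y, Rabs (pr x - pr y) <= cnorm (Csub x y)) ->
    Cauchy_crit (fun N => pr (P N n))).
  { intros pr Hpr eps He. destruct (HC (eps/2)) as [N0 H0]; [lra|]. exists N0; intros N M HN HM.
    pose proof (bnd_pt _ _ n (H0 N M HN HM)) as Hb. pose proof (Hpr (P N n) (P M n)).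
    unfold R_dist. unfold sub, add, opp in Hb. fold (Csub (P N n) (P M n)) in Hb. lra. }
  destruct (R_complete _ (Hcomp fst cnorm_fst_sub)) as [l1 Hl1].
  destruct (R_complete _ (Hcomp snd cnorm_snd_sub)) as [l2 Hl2].
  assert (Hcv : Ccv (fun N => P N n) (l1, l2)) by (split; auto).
  unfold pointwise_lim. rewrite (Clim_eq _ _ Hcv); auto. Qed.

(* A Cauchy sequence converges in l^1 to its pointwise limit: on each finite set
   of indices the pointwise limit is reached, and the Cauchy bound survives. *)
Lemma l1_cauchy_converges P : l1_cauchy P -> l1_converges P (pointwise_lim P).
Proof. intros HC eps He. set (a := pointwise_lim P). pose proof (l1_cauchy_pointwise P HC) as Hpt.
  destruct (HC (eps/2)) as [N0 H0]; [lra|]. exists N0. intros N HN l Hl.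
  set (d := eps / (2 * (INR (length l) + 1))).
  assert (Hd : 0 < d) by (unfold d; apply Rdiv_lt_0_compat; [lra|]; pose proof (pos_INR (length l)); lra).
  assert (Hbd : INR (length l) * d <= eps / 2).
  { unfold d. pose proof (pos_INR (length l)).
    apply (Rmult_le_reg_r (2 * (INR (length l) + 1))); [lra|]. field_simplify; lra. }
  clearbody d.
  assert (HK : exists K, forall M, (K <= M)%nat -> forall n, In n l -> cnorm (Csub (P M n) (a n)) <= d).
  { clear Hl Hbd. induction l as [|x l IH]. exists O; intros M _ n [].
    destruct IH as [K1 HK1]. destruct (Ccv_cnorm_inv _ _ (Hpt x) d Hd) as [K2 HK2].
    exists (max K1 K2). intros M HM n [<-|Hn]. apply HK2; lia. apply HK1; auto; lia. }
  destruct HK as [K HK]. set (M := max K N0).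
  apply Rle_trans with (lsum (fun n => cnorm (sub (P N) (P M) n) + cnorm (Csub (P M n) (a n))) l).
  { apply lsum_le; intros n _. unfold sub, add, opp.
    replace (Cadd (P N n) (Copp (a n))) with (Cadd (Csub (P N n) (P M n)) (Csub (P M n) (a n)))
      by (unfold Csub; Cring).
    apply cnorm_add. }
  rewrite lsum_plus. pose proof (H0 N M HN ltac:(lia) l Hl).
  pose proof (lsum_le_len (fun n => cnorm (Csub (P M n) (a n))) l d (fun n Hn => HK M ltac:(lia) n Hn)).
  lra. Qed.

Lemma l1_converges_L1 P a : (forall N, L1 (P N)) -> l1_converges P a -> L1 a.
Proof. intros HL Hconv.
  destruct (Hconv 1 ltac:(lra)) as [N1 HN1]. destruct (HL N1) as [M1 HM1].
  exists (M1 + 1). intros l Hl. specialize (HN1 N1 (le_n _) l Hl). specialize (HM1 l Hl).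
  apply Rle_trans with (lsum (fun n => cnorm (P N1 n) + cnorm (sub (P N1) a n)) l).
  { apply lsum_le; intros n _. unfold sub, add, opp.
    replace (a n) with (Cadd (P N1 n) (Copp (Cadd (P N1 n) (Copp (a n))))) at 1 by Cring.
    eapply Rle_trans; [apply cnorm_add|]. rewrite cnorm_opp; lra. }
  rewrite lsum_plus; lra. Qed.

Lemma l1_complete P : (forall N, L1 (P N)) -> l1_cauchy P ->
  L1 (pointwise_lim P) /\ l1_converges P (pointwise_lim P).
Proof. intros HL HC. pose proof (l1_cauchy_converges P HC).
  split; auto. eapply l1_converges_L1; eauto. Qed.

Lemma l1_cauchy_of_majorant P (S : nat -> R) :
  (forall N M, (N <= M)%nat -> bnd (sub (P M) (P N)) (S M - S N)) -> Cauchy_crit S -> l1_cauchy P.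
Proof. intros Hd HC eps He. destruct (HC eps He) as [N0 H0]. exists N0. intros N M HN HM.
  destruct (le_dec N M) as [Hle|Hle].
  - apply bnd_sub_sym. eapply bnd_mono; [apply Hd; auto|].
    specialize (H0 M N ltac:(lia) ltac:(lia)). unfold R_dist in H0. pose proof (Rle_abs (S M - S N)). lra.
  - eapply bnd_mono; [apply Hd; lia|].
    specialize (H0 N M ltac:(lia) ltac:(lia)). unfold R_dist in H0. pose proof (Rle_abs (S N - S M)). lra. Qed.

Definition partial_series (c : nat -> R) (v : nat -> NCT) (N : nat) : NCT :=
  fun n => Csum (map (fun k => Cscal (c k) (v k n)) (seq 0 (N + 1))).

Lemma partial_series_diff c v N M : (N <= M)%nat ->
  sub (partial_series c v M) (partial_series c v N) =
  (fun n => Csum (map (fun k => Cscal (c k) (v k n)) (seq (N + 1) (M - N)))).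
Proof. intros H. apply functional_extensionality; intros n. unfold partial_series, sub, add, opp.
  replace (M + 1)%nat with ((N + 1) + (M - N))%nat by lia. rewrite seq_app, map_app, Csum_app.
  simpl (0 + _)%nat. Cring. Qed.

Lemma series_complete (c : nat -> R) (v : nat -> NCT) (B : nat -> R) :
  (forall k, bnd (v k) (B k)) -> Cauchy_crit (sum_f_R0 (fun k => Rabs (c k) * B k)) ->
  L1 (pointwise_lim (partial_series c v)) /\
  l1_converges (partial_series c v) (pointwise_lim (partial_series c v)).
Proof. intros Hv HC. apply l1_complete.
  - intros N. exists (lsum (fun k => Rabs (c k) * B k) (seq 0 (N + 1))).
    apply (bnd_Csum (fun k => scal (c k) (v k))). intros; apply bnd_scal; auto.
  - eapply l1_cauchy_of_majorant; [|exact HC]. intros N M H. rewrite partial_series_diff by auto.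
    replace (sum_f_R0 (fun k => Rabs (c k) * B k) M - sum_f_R0 (fun k => Rabs (c k) * B k) N)
      with (lsum (fun k => Rabs (c k) * B k) (seq (N + 1) (M - N))).
    + apply (bnd_Csum (fun k => scal (c k) (v k))). intros; apply bnd_scal; auto.
    + rewrite <- !lsum_seq. replace (M + 1)%nat with ((N + 1) + (M - N))%nat by lia.
      rewrite seq_app, lsum_app. simpl (0 + _)%nat. ring. Qed.

Section Continuity.
Variable theta : nat -> nat -> R.
Notation mul := (mul theta).

Lemma l1_converges_mul_l c u a : L1 c -> l1_converges u a -> (forall N, L1 (u N)) -> L1 a ->
  forall n, Ccv (fun N => mul c (u N) n) (mul c a n).
Proof. intros [Mc Hc] Hconv Hu Ha n. apply Ccv_cnorm. intros eps He.
  pose proof (bnd_ge0 _ _ Hc).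
  destruct (Hconv (eps / (2 * Mc + 1))) as [N0 H0]. apply Rdiv_lt_0_compat; lra.
  exists N0. intros N HN.
  replace (Csub (mul c (u N) n) (mul c a n)) with (mul c (sub (u N) a) n).
  2: { rewrite mul_subR; auto. eexists; eauto. }
  eapply Rle_trans; [apply (bnd_pt _ _ n (mul_bnd theta c _ _ _ Hc (H0 N HN)))|].
  apply (Rmult_le_reg_r (2 * Mc + 1)); [lra|]. field_simplify; [|lra]. nra. Qed.

Lemma l1_converges_mul_r c u a : L1 c -> l1_converges u a -> (forall N, L1 (u N)) -> L1 a ->
  forall n, Ccv (fun N => mul (u N) c n) (mul a c n).
Proof. intros [Mc Hc] Hconv Hu Ha n. apply Ccv_cnorm. intros eps He.
  pose proof (bnd_ge0 _ _ Hc).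
  destruct (Hconv (eps / (2 * Mc + 1))) as [N0 H0]. apply Rdiv_lt_0_compat; lra.
  exists N0. intros N HN.
  replace (Csub (mul (u N) c n) (mul a c n)) with (mul (sub (u N) a) c n).
  2: { rewrite mul_subL; auto. eexists; eauto. }
  eapply Rle_trans; [apply (bnd_pt _ _ n (mul_bnd theta _ c _ _ (H0 N HN) Hc))|].
  apply (Rmult_le_reg_r (2 * Mc + 1)); [lra|]. field_simplify; [|lra]. nra. Qed.

End Continuity.

(** * Rapid decay gives l^1 bounds *)

Lemma sum_inv_sq N : sum_f_R0 (fun k => / (1 + INR k) ^ 2) N <= 2 - / (INR N + 1).
Proof. induction N.
  - simpl sum_f_R0. simpl INR. replace ((1 + 0) ^ 2) with 1 by ring. replace (0 + 1) with 1 by ring.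
    rewrite Rinv_1; lra.
  - rewrite tech5, S_INR. pose proof (pos_INR N).
    assert (/ (1 + (INR N + 1)) ^ 2 + / (INR N + 1 + 1) <= / (INR N + 1)).
    { replace (1 + (INR N + 1)) with (INR N + 2) by ring. replace (INR N + 1 + 1) with (INR N + 2) by ring.
      apply (Rmult_le_reg_r ((INR N + 2)^2 * (INR N + 1))). apply Rmult_lt_0_compat; [apply pow_lt|]; lra.
      field_simplify; try lra; try nra. }
    lra. Qed.

Lemma lsum_prod4 f1 f2 f3 f4 L1 L2 L3 L4 :
  lsum (fun n => f1 (z1 n) * f2 (z2 n) * f3 (z3 n) * f4 (z4 n)) (prod4 L1 L2 L3 L4) =
  lsum f1 L1 * lsum f2 L2 * lsum f3 L3 * lsum f4 L4.
Proof. unfold prod4. rewrite lsum_flat_map.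
  rewrite (lsum_ext _ (fun a => f1 a * (lsum f2 L2 * lsum f3 L3 * lsum f4 L4))).
  rewrite lsum_scal_r; ring.
  intros a _. rewrite lsum_flat_map.
  rewrite (lsum_ext _ (fun b => f2 b * (f1 a * lsum f3 L3 * lsum f4 L4))).
  rewrite lsum_scal_r; ring.
  intros b _. rewrite lsum_flat_map.
  rewrite (lsum_ext _ (fun c => f3 c * (f1 a * f2 b * lsum f4 L4))).
  rewrite lsum_scal_r; ring.
  intros c _. rewrite lsum_map. simpl. rewrite <- !lsum_scal. apply lsum_ext; intros; ring. Qed.

Definition wz (z : Z) : R := / (1 + Rabs (IZR z)) ^ 2.

Lemma wz_pos z : 0 < wz z.
Proof. unfold wz. apply Rinv_0_lt_compat, pow_lt. pose proof (Rabs_pos (IZR z)); lra. Qed.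

(* sum_{z in Z} wz z <= 4: two copies of the series sum_k 1/(1+k)^2 <= 2. *)
Lemma lsum_wz L : NoDup L -> lsum wz L <= 4.
Proof. intros HL.
  set (N := fold_right Nat.max O (map (fun z => Z.to_nat (Z.abs z)) L)).
  assert (HN : forall z, In z L -> (Z.abs z <= Z.of_nat N)%Z).
  { intros z Hz. unfold N. clear HL. induction L; [destruct Hz|]. simpl. destruct Hz as [<-|Hz]. lia.
    specialize (IHL Hz). lia. }
  set (ZL := map Z.of_nat (seq 0 (N + 1)) ++ map (fun k => (- Z.of_nat (S k))%Z) (seq 0 (N + 1))).
  apply Rle_trans with (lsum wz ZL).
  { apply lsum_incl_le. intros; left; apply wz_pos. auto.
    - unfold ZL. apply NoDup_app. apply NoDup_map_injective. intros; lia. apply seq_NoDup.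
      apply NoDup_map_injective. intros; lia. apply seq_NoDup.
      intros z H1 H2. apply in_map_iff in H1 as [k [<- _]]. apply in_map_iff in H2 as [k' [E _]]. lia.
    - intros z Hz. specialize (HN z Hz). unfold ZL. apply in_or_app. destruct (Z_le_dec 0 z).
      left. apply in_map_iff. exists (Z.to_nat z). split. lia. apply in_seq. lia.
      right. apply in_map_iff. exists (Z.to_nat (- z - 1)). split. lia. apply in_seq. lia. }
  unfold ZL. rewrite lsum_app, !lsum_map, !lsum_seq.
  assert (Hpos : sum_f_R0 (fun x => wz (Z.of_nat x)) N <= 2).
  { apply Rle_trans with (2 - / (INR N + 1)).
    - eapply Rle_trans; [|apply (sum_inv_sq N)]. apply sum_Rle. intros k _. unfold wz.
      rewrite <- INR_IZR_INZ, Rabs_right. lra. apply Rle_ge, pos_INR.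
    - pose proof (pos_INR N). assert (0 < / (INR N + 1)) by (apply Rinv_0_lt_compat; lra). lra. }
  assert (Hneg : sum_f_R0 (fun x => wz (- Z.of_nat (S x))) N <= 2).
  { eapply Rle_trans; [|apply Hpos]. apply sum_Rle. intros k _. unfold wz.
    rewrite opp_IZR, Rabs_Ropp, <- !INR_IZR_INZ, !Rabs_right by (apply Rle_ge, pos_INR).
    rewrite S_INR. pose proof (pos_INR k).
    apply Rinv_le_contravar. apply pow_lt; lra. apply pow_incr; lra. }
  lra. Qed.

Definition w4 (n : Z4) : R := wz (z1 n) * wz (z2 n) * wz (z3 n) * wz (z4 n).

(* The weight w4 is summable on Z^4, with total mass at most 4^4. *)
Lemma lsum_w4 l : NoDup l -> lsum w4 l <= 256.
Proof. intros Hl.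
  set (L1 := nodup eqd (map z1 l)). set (L2 := nodup eqd (map z2 l)).
  set (L3 := nodup eqd (map z3 l)). set (L4 := nodup eqd (map z4 l)).
  assert (Hw : forall L, 0 <= lsum wz L) by (intros; apply lsum_ge0; intros; left; apply wz_pos).
  apply Rle_trans with (lsum w4 (prod4 L1 L2 L3 L4)).
  { apply lsum_incl_le; auto.
    - intros; unfold w4; pose proof (wz_pos (z1 x)); pose proof (wz_pos (z2 x));
      pose proof (wz_pos (z3 x)); pose proof (wz_pos (z4 x)).
      apply Rmult_le_pos; [apply Rmult_le_pos; [apply Rmult_le_pos|]|]; lra.
    - apply NoDup_prod4; apply NoDup_nodup.
    - intros n Hn. apply in_prod4. unfold L1, L2, L3, L4; rewrite !nodup_In; repeat split; apply in_map; auto. }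
  unfold w4. rewrite lsum_prod4.
  pose proof (lsum_wz L1 (NoDup_nodup _ _)); pose proof (lsum_wz L2 (NoDup_nodup _ _));
  pose proof (lsum_wz L3 (NoDup_nodup _ _)); pose proof (lsum_wz L4 (NoDup_nodup _ _)).
  pose proof (Hw L1); pose proof (Hw L2); pose proof (Hw L3); pose proof (Hw L4).
  replace 256 with (4 * 4 * 4 * 4) by ring.
  repeat apply Rmult_le_compat; auto; repeat apply Rmult_le_pos; auto. Qed.

Lemma zc_le n i : 1 + Rabs (IZR (zc n i)) <=
  1 + Rabs (IZR (z1 n)) + Rabs (IZR (z2 n)) + Rabs (IZR (z3 n)) + Rabs (IZR (z4 n)).
Proof. pose proof (Rabs_pos (IZR (z1 n))); pose proof (Rabs_pos (IZR (z2 n)));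
  pose proof (Rabs_pos (IZR (z3 n))); pose proof (Rabs_pos (IZR (z4 n))).
  destruct i as [|[|[|[|[|i]]]]]; simpl; try (rewrite Rabs_R0); lra. Qed.

Lemma pow2_product_le a b1 b2 b3 b4 S : 1 <= a <= S -> 1 <= b1 <= S -> 1 <= b2 <= S ->
  1 <= b3 <= S -> 1 <= b4 <= S -> a ^ 2 * (b1 ^ 2 * b2 ^ 2 * b3 ^ 2 * b4 ^ 2) <= S ^ 10.
Proof. intros Ha H1 H2 H3 H4.
  replace (S ^ 10) with (S ^ 2 * (S ^ 2 * S ^ 2 * S ^ 2 * S ^ 2)) by ring.
  assert (Hsq : forall x, 1 <= x <= S -> 1 <= x ^ 2 <= S ^ 2).
  { intros x Hx. split. nra. apply pow_incr; lra. }
  pose proof (Hsq _ Ha); pose proof (Hsq _ H1); pose proof (Hsq _ H2); pose proof (Hsq _ H3); pose proof (Hsq _ H4).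
  repeat (apply Rmult_le_compat; try nra). Qed.

(* Decay of order 10 makes |h(n)| (1 + |n_i|)^2 dominated by the summable weight w4. *)
Lemma rapid_weight h : rapid h ->
  exists K, 0 <= K /\ forall i n, cnorm (h n) * (1 + Rabs (IZR (zc n i))) ^ 2 <= K * w4 n.
Proof. intros Hr. destruct (Hr 10%nat) as [M HM]. exists (2 * M).
  assert (HM0 : 0 <= M).
  { specialize (HM Z4zero). eapply Rle_trans; [|apply HM]. apply Rmult_le_pos.
    unfold Cabs; apply sqrt_pos. apply pow_le. simpl. rewrite Rabs_R0; lra. }
  split; [lra|]. intros i n.
  set (S := 1 + Rabs (IZR (z1 n)) + Rabs (IZR (z2 n)) + Rabs (IZR (z3 n)) + Rabs (IZR (z4 n))).
  specialize (HM n). fold S in HM.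
  assert (Hb : forall j, 1 <= 1 + Rabs (IZR (zc n j)) <= S)
    by (intros j; split; [pose proof (Rabs_pos (IZR (zc n j))); lra|apply zc_le]).
  set (B := (1 + Rabs (IZR (z1 n))) ^ 2 * (1 + Rabs (IZR (z2 n))) ^ 2 *
            (1 + Rabs (IZR (z3 n))) ^ 2 * (1 + Rabs (IZR (z4 n))) ^ 2).
  assert (Hprod : (1 + Rabs (IZR (zc n i))) ^ 2 * B <= S ^ 10)
    by (apply pow2_product_le; [apply Hb|apply (Hb 1%nat)|apply (Hb 2%nat)|apply (Hb 3%nat)|apply (Hb 4%nat)]).
  assert (HB : 0 < B) by (unfold B; pose proof (Hb 1%nat); pose proof (Hb 2%nat); pose proof (Hb 3%nat);
    pose proof (Hb 4%nat); simpl in *; repeat apply Rmult_lt_0_compat; try apply pow_lt; lra).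
  assert (Hw : w4 n = / B) by (unfold w4, wz, B; rewrite !Rinv_mult; reflexivity).
  pose proof (cnorm_Cabs (h n)). assert (0 <= Cabs (h n)) by (unfold Cabs; apply sqrt_pos).
  assert (0 <= (1 + Rabs (IZR (zc n i))) ^ 2) by (apply pow_le; pose proof (Hb i); lra).
  rewrite Hw. apply (Rmult_le_reg_r B); auto.
  rewrite (Rmult_assoc (2 * M)), Rinv_l, Rmult_1_r by lra.
  apply Rle_trans with (2 * (Cabs (h n) * S ^ 10)); [|lra].
  rewrite Rmult_assoc. apply Rle_trans with (2 * Cabs (h n) * ((1 + Rabs (IZR (zc n i))) ^ 2 * B)).
  - apply Rmult_le_compat_r; [apply Rmult_le_pos; lra|lra].
  - rewrite Rmult_assoc. apply Rmult_le_compat_l; [lra|]. apply Rmult_le_compat_l; auto. Qed.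

Lemma bnd_rapid h : rapid h -> exists K, forall i,
  bnd h K /\ bnd (delta i h) K /\ bnd (delta i (delta i h)) K.
Proof. intros Hr. destruct (rapid_weight h Hr) as [K [HK0 HK]]. exists (K * 256). intros i.
  assert (Hdom : forall (f : NCT), (forall n, cnorm (f n) <= cnorm (h n) * (1 + Rabs (IZR (zc n i))) ^ 2) ->
    bnd f (K * 256)).
  { intros f Hf l Hl. apply Rle_trans with (lsum (fun n => K * w4 n) l).
    apply lsum_le; intros n _; eapply Rle_trans; [apply Hf|apply HK].
    rewrite lsum_scal. apply Rmult_le_compat_l; auto. apply lsum_w4; auto. }
  assert (Hz : forall n, 0 <= Rabs (IZR (zc n i))) by (intros; apply Rabs_pos).
  split; [|split]; apply Hdom; intros n; pose proof (cnorm_ge0 (h n)); pose proof (Hz n).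
  - nra.
  - unfold delta; rewrite cnorm_scal. nra.
  - unfold delta; rewrite !cnorm_scal. nra. Qed.

(** * Double series: square versus triangular partial sums *)

Definition square (N : nat) : list (nat * nat) := list_prod (seq 0 (N + 1)) (seq 0 (N + 1)).
Definition triangle (N : nat) : list (nat * nat) :=
  flat_map (fun n => map (fun j => (j, (n - j)%nat)) (seq 0 (n + 1))) (seq 0 (N + 1)).

Lemma in_square N j k : In (j, k) (square N) <-> (j <= N /\ k <= N)%nat.
Proof. unfold square. rewrite in_prod_iff, !in_seq. lia. Qed.
Lemma in_triangle N j k : In (j, k) (triangle N) <-> (j + k <= N)%nat.
Proof. unfold triangle. rewrite in_flat_map. split.
  - intros [n [Hn H]]. apply in_seq in Hn. apply in_map_iff in H as [j' [E Hj]]. apply in_seq in Hj.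
    inversion E; subst. lia.
  - intros H. exists (j + k)%nat. split. apply in_seq; lia. apply in_map_iff. exists j. split.
    f_equal; lia. apply in_seq; lia. Qed.
Lemma NoDup_square N : NoDup (square N).
Proof. apply NoDup_list_prod; apply seq_NoDup. Qed.
Lemma NoDup_triangle N : NoDup (triangle N).
Proof. unfold triangle. apply NoDup_flat_map_disjoint. apply seq_NoDup.
  - intros n _. apply NoDup_map_injective. intros x y E; inversion E; auto. apply seq_NoDup.
  - intros x y z Hx Hy Hxy Hz Hz'. apply in_map_iff in Hz as [a [<- Ha]]. apply in_map_iff in Hz' as [b [E Hb]].
    apply in_seq in Ha; apply in_seq in Hb. inversion E; subst. lia. Qed.

Lemma incl_square N M : (N <= M)%nat -> incl (square N) (square M).
Proof. intros H [j k] Hp. apply in_square in Hp; apply in_square; lia. Qed.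
Lemma incl_triangle_square N : incl (triangle N) (square N).
Proof. intros [j k] Hp. apply in_triangle in Hp; apply in_square; lia. Qed.

Lemma lsum_square f N :
  lsum (fun p => f (fst p) (snd p)) (square N) = sum_f_R0 (fun j => sum_f_R0 (fun k => f j k) N) N.
Proof. unfold square. rewrite lsum_list_prod, <- lsum_seq. apply lsum_ext; intros. simpl. apply lsum_seq. Qed.
Lemma lsum_triangle f N :
  lsum (fun p => f (fst p) (snd p)) (triangle N) = sum_f_R0 (fun n => sum_f_R0 (fun j => f j (n - j)%nat) n) N.
Proof. unfold triangle. rewrite lsum_flat_map, <- lsum_seq. apply lsum_ext; intros. rewrite lsum_map. simpl.
  apply lsum_seq. Qed.

Lemma square_abs_cv (g : nat * nat -> R) B : (forall N, lsum (fun p => Rabs (g p)) (square N) <= B) ->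
  Cauchy_crit (fun N => lsum (fun p => Rabs (g p)) (square N)).
Proof. intros HB. apply CV_Cauchy. apply growing_cv.
  - intros N. apply lsum_incl_le; auto using NoDup_square, incl_square; intros; apply Rabs_pos.
  - exists B. intros x [N ->]. auto. Qed.

(* Absolutely convergent double series: square partial sums are Cauchy ... *)
Lemma square_cauchy (g : nat * nat -> R) B : (forall N, lsum (fun p => Rabs (g p)) (square N) <= B) ->
  Cauchy_crit (fun N => lsum g (square N)).
Proof. intros HB eps He. destruct (square_abs_cv g B HB eps He) as [N0 H0]. exists N0. intros n m Hn Hm.
  specialize (H0 n m Hn Hm). unfold R_dist in *.
  assert (G : forall N M, (N <= M)%nat -> Rabs (lsum g (square M) - lsum g (square N)) <=
        lsum (fun p => Rabs (g p)) (square M) - lsum (fun p => Rabs (g p)) (square N)).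
  { intros N M H. apply lsum_diff_le; auto using NoDup_square, incl_square. }
  destruct (le_dec n m).
  - specialize (G n m l). rewrite Rabs_minus_sym. eapply Rle_lt_trans; [apply G|].
    rewrite Rabs_minus_sym in H0. eapply Rle_lt_trans; [apply Rle_abs|auto].
  - specialize (G m n ltac:(lia)). eapply Rle_lt_trans; [apply G|].
    eapply Rle_lt_trans; [apply Rle_abs|auto]. Qed.

(* ... and have the same limit as the triangular partial sums, since the triangle
   of size n contains the square of size n/2. *)
Lemma square_triangle (g : nat * nat -> R) B : (forall N, lsum (fun p => Rabs (g p)) (square N) <= B) ->
  Un_cv (fun N => lsum g (square N) - lsum g (triangle N)) 0.
Proof. intros HB eps He. destruct (square_abs_cv g B HB eps He) as [N0 H0]. exists (2 * N0)%nat. intros n Hn.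
  unfold R_dist. rewrite Rminus_0_r.
  assert (I2 : incl (square (Nat.div2 n)) (triangle n)).
  { intros [j k] Hp. apply in_square in Hp; apply in_triangle.
    pose proof (Nat.div2_odd n). destruct (Nat.odd n); simpl in *; lia. }
  pose proof (lsum_diff_le g _ _ (NoDup_triangle n) (NoDup_square n) (incl_triangle_square n)).
  pose proof (lsum_incl_le (fun p => Rabs (g p)) _ _ (fun _ => Rabs_pos _) (NoDup_square _) (NoDup_triangle n) I2).
  assert (Nat.div2 n >= N0)%nat by (pose proof (Nat.div2_odd n); destruct (Nat.odd n); simpl in *; lia).
  specialize (H0 n (Nat.div2 n) ltac:(lia) ltac:(lia)). unfold R_dist in H0.
  pose proof (Rle_abs (lsum (fun p => Rabs (g p)) (square n) - lsum (fun p => Rabs (g p)) (square (Nat.div2 n)))).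
  lra. Qed.

(** * Taylor coefficients of K *)

Lemma series_terms_lt1 (u : nat -> R) l : Un_cv (sum_f_R0 u) l ->
  exists N0, forall k, (N0 < k)%nat -> Rabs (u k) < 1.
Proof. intros Hu. destruct (Hu (1/2) ltac:(lra)) as [N0 HN0]. exists N0. intros k Hk.
  destruct k; [lia|]. pose proof (HN0 (S k) ltac:(lia)) as H1; pose proof (HN0 k ltac:(lia)) as H2.
  unfold Rdist in *. rewrite tech5 in H1.
  replace (u (S k)) with ((sum_f_R0 u k + u (S k) - l) - (sum_f_R0 u k - l)) by ring.
  pose proof (Rabs_triang (sum_f_R0 u k + u (S k) - l) (- (sum_f_R0 u k - l))) as Htri.
  rewrite Rabs_Ropp in Htri. unfold Rminus at 1. lra. Qed.

(* A power series converging everywhere is absolutely convergent, with bounded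
   partial sums of |c_k| r^k for every r > 0 (compare with the geometric series at 2r). *)
Lemma taylor1_abs c F r : taylor1 c F -> 0 < r ->
  exists B, forall N, sum_f_R0 (fun k => Rabs (c k) * r ^ k) N <= B.
Proof. intros HT Hr. destruct (series_terms_lt1 _ _ (HT (2 * r) ltac:(lra))) as [N0 HN0].
  assert (Ht : forall k, (N0 < k)%nat -> Rabs (c k) * r ^ k <= (/2) ^ k).
  { intros k Hk. specialize (HN0 k Hk).
    rewrite Rabs_mult, Rpow_mult_distr, Rabs_mult, (Rabs_right (r ^ k)), (Rabs_right (2 ^ k)) in HN0
      by (apply Rle_ge, pow_le; lra).
    assert (0 < 2 ^ k) by (apply pow_lt; lra).
    rewrite pow_inv. apply (Rmult_le_reg_r (2 ^ k)); auto. rewrite Rinv_l by lra. nra. }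
  set (S' := sum_f_R0 (fun k => Rabs (c k) * r ^ k)).
  assert (Hmono : forall N M, (N <= M)%nat -> S' N <= S' M).
  { intros N M H. induction H; [lra|]. unfold S' in *; rewrite tech5.
    pose proof (Rabs_pos (c (S m))); pose proof (pow_le r (S m) ltac:(lra)). nra. }
  assert (Htail : forall m, S' (N0 + m)%nat <= S' N0 + 1 - (/2) ^ (N0 + m)).
  { induction m. rewrite Nat.add_0_r. pose proof (pow_le (/2) N0 ltac:(lra)).
    assert ((/2) ^ N0 <= 1) by (apply pow_le1; lra). lra.
    replace (N0 + S m)%nat with (S (N0 + m)) by lia. unfold S' in *. rewrite tech5.
    specialize (Ht (S (N0 + m)) ltac:(lia)). simpl ((/2) ^ S (N0 + m)) in *. lra. }
  exists (S' N0 + 1). intros N. fold S'. destruct (le_dec N0 N).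
  - replace N with (N0 + (N - N0))%nat by lia. pose proof (Htail (N - N0)%nat).
    pose proof (pow_le (/2) (N0 + (N - N0)) ltac:(lra)). lra.
  - pose proof (Hmono N N0 ltac:(lia)). lra. Qed.

Lemma taylor1_cauchy c F r : taylor1 c F -> 0 < r -> Cauchy_crit (sum_f_R0 (fun k => Rabs (c k) * r ^ k)).
Proof. intros HT Hr. destruct (taylor1_abs c F r HT Hr) as [B HB]. apply CV_Cauchy, growing_cv.
  - intros N; rewrite tech5. pose proof (Rabs_pos (c (S N))); pose proof (pow_le r (S N) ltac:(lra)). nra.
  - exists B. intros x [N ->]; auto. Qed.

Lemma limit_at0_unique (F : R -> R) a L B : 0 <= B ->
  (forall s, s <> 0 -> Rabs s <= 1 -> Rabs (F s - a) <= Rabs s * B) ->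
  (forall eps, 0 < eps -> exists d, 0 < d /\ forall s, s <> 0 -> Rabs s < d -> Rabs (F s - L) < eps) ->
  a = L.
Proof. intros HB Ha HL. apply Rminus_diag_uniq, Rabs_le_eps_eq0. intros eps He.
  destruct (HL (eps / 2) ltac:(lra)) as [d [Hd Hd']].
  set (s := Rmin (d / 2) (Rmin 1 (eps / (2 * (B + 1))))).
  assert (Hs0 : 0 < s) by (unfold s; repeat apply Rmin_pos; try lra; apply Rdiv_lt_0_compat; lra).
  assert (s <= d / 2) by apply Rmin_l. assert (s <= 1) by (unfold s; eapply Rle_trans; [apply Rmin_r|apply Rmin_l]).
  assert (Hse : s <= eps / (2 * (B + 1))) by (unfold s; eapply Rle_trans; [apply Rmin_r|apply Rmin_r]).
  specialize (Hd' s ltac:(lra) ltac:(rewrite Rabs_right; lra)).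
  specialize (Ha s ltac:(lra) ltac:(rewrite Rabs_right; lra)). rewrite (Rabs_right s) in Ha by lra.
  assert (s * B <= eps / 2).
  { apply Rle_trans with (eps / (2 * (B + 1)) * B); [apply Rmult_le_compat_r; lra|].
    apply (Rmult_le_reg_r (2 * (B + 1))); [lra|]. field_simplify; nra. }
  replace (a - L) with ((F s - L) - (F s - a)) by ring.
  eapply Rle_trans; [apply Rabs_triang|]. rewrite Rabs_Ropp. lra. Qed.

Lemma sum_drop0 (f : nat -> R) N :
  sum_f_R0 f N - f O = sum_f_R0 (fun k => match k with O => 0 | _ => f k end) N.
Proof. induction N; simpl. ring. rewrite <- IHN. ring. Qed.

(* The constant coefficient of an everywhere convergent power series is its limit at 0:
   for |s| <= 1 the series differs from c_0 by at most |s| sum_k |c_k|. *)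
Lemma taylor1_c0 c F L : taylor1 c F ->
  (forall eps, 0 < eps -> exists delta, 0 < delta /\ forall s, s <> 0 -> Rabs s < delta -> Rabs (F s - L) < eps) ->
  c O = L.
Proof. intros HT HL. destruct (taylor1_abs c F 1 HT ltac:(lra)) as [B HB].
  apply (limit_at0_unique F _ _ B); auto.
  { eapply Rle_trans; [|apply (HB O)]; simpl; rewrite Rmult_1_r; apply Rabs_pos. }
  intros s Hs0 Hs1. apply (lim_le (sum_f_R0 (fun n => c n * s ^ n))); [apply HT; auto|].
  intros N. replace (c O) with (c O * s ^ 0) by (simpl; ring). rewrite sum_drop0.
  eapply Rle_trans; [apply sum_f_R0_triangle|].
  apply Rle_trans with (sum_f_R0 (fun k => Rabs s * (Rabs (c k) * 1 ^ k)) N).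
  - apply sum_Rle. intros [|k] _.
    + rewrite Rabs_R0. pose proof (Rabs_pos s); pose proof (Rabs_pos (c O)); simpl; nra.
    + rewrite Rabs_mult, <- RPow_abs, pow1. simpl. rewrite Rmult_1_r.
      pose proof (pow_le1 (Rabs s) k (conj (Rabs_pos s) Hs1)).
      pose proof (Rabs_pos (c (S k))). pose proof (Rabs_pos s).
      assert (Rabs (c (S k)) * Rabs s * (Rabs s ^ k) <= Rabs (c (S k)) * Rabs s * 1)
        by (apply Rmult_le_compat_l; [apply Rmult_le_pos|]; auto).
      lra.
  - rewrite (sum_eq _ (fun k => (Rabs (c k) * 1 ^ k) * Rabs s)) by (intros; ring).
    rewrite <- scal_sum. apply Rmult_le_compat_l; [apply Rabs_pos|apply HB]. Qed.

(* K(s) -> 1/2 as s -> 0, since (e^{-s} - 1) / (-s) -> exp'(0) = 1. *)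
Lemma Kf_lim : forall eps, 0 < eps ->
  exists delta, 0 < delta /\ forall s, s <> 0 -> Rabs s < delta -> Rabs (Kf s - 1/2) < eps.
Proof. intros eps He. destruct (derivable_pt_lim_exp 0 eps He) as [d Hd]. exists d; split; [apply cond_pos|].
  intros s Hs Hsd. specialize (Hd (- s) ltac:(lra) ltac:(rewrite Rabs_Ropp; auto)).
  rewrite exp_0, Rplus_0_l in Hd. unfold Kf.
  replace ((1 - exp (- s)) / (2 * s) - 1 / 2) with (((exp (- s) - 1) / - s - 1) / 2) by (field; auto).
  unfold Rdiv at 1. rewrite Rabs_mult. rewrite (Rabs_right (/2)) by lra. lra. Qed.

(** * Taylor coefficients of H on the antidiagonal are those of G *)

(* The n-th coefficient of the one-variable series s |-> sum_{j,k} c_jk s^j (-s)^k. *)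
Definition antidiag_H (cH : nat -> nat -> R) (n : nat) : R :=
  sum_f_R0 (fun j => cH j (n - j)%nat * (-1) ^ (n - j)) n.

Lemma pow_neg s k : (- s) ^ k = (-1) ^ k * s ^ k.
Proof. induction k; simpl; [ring|]. rewrite IHk; ring. Qed.

Lemma taylor2_abs cH r : taylor2 cH Hf -> 0 < r ->
  exists M, forall N, lsum (fun p => Rabs (cH (fst p) (snd p)) * r ^ (fst p) * r ^ (snd p)) (square N) <= M.
Proof. intros HH Hr. destruct (HH r r ltac:(lra) ltac:(lra) ltac:(lra)) as [_ [M HM]].
  exists M. intros N. rewrite (lsum_square (fun j k => Rabs (cH j k) * r ^ j * r ^ k)).
  eapply Rle_trans; [|apply (HM N)]. right. apply sum_eq; intros; apply sum_eq; intros.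
  rewrite !Rabs_mult, !(Rabs_right (r ^ _)) by (apply Rle_ge, pow_le; lra). ring. Qed.

Lemma triangle_antidiag_H cH s N :
  lsum (fun p => cH (fst p) (snd p) * s ^ (fst p) * (- s) ^ (snd p)) (triangle N) =
  sum_f_R0 (fun n => antidiag_H cH n * s ^ n) N.
Proof. rewrite (lsum_triangle (fun j k => cH j k * s ^ j * (- s) ^ k)). apply sum_eq; intros n _.
  unfold antidiag_H. rewrite Rmult_comm, scal_sum. apply sum_eq; intros j Hj.
  rewrite pow_neg. assert (E : s ^ n = s ^ j * s ^ (n - j)) by (rewrite <- pow_add; f_equal; lia).
  rewrite E. ring. Qed.

Lemma antidiag_H_series_cv cH s : taylor2 cH Hf -> s <> 0 ->
  exists P, Un_cv (fun N => lsum (fun p => cH (fst p) (snd p) * s ^ (fst p) * (- s) ^ (snd p)) (square N)) P /\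
            Un_cv (sum_f_R0 (fun n => antidiag_H cH n * s ^ n)) P.
Proof. intros HH Hs.
  destruct (taylor2_abs cH (Rabs s) HH (Rabs_pos_lt _ Hs)) as [M HM].
  assert (HM' : forall N, lsum (fun p => Rabs (cH (fst p) (snd p) * s ^ (fst p) * (- s) ^ (snd p))) (square N) <= M).
  { intros N. eapply Rle_trans; [|apply (HM N)]. right. apply lsum_ext; intros.
    rewrite !Rabs_mult, <- !RPow_abs, Rabs_Ropp; reflexivity. }
  destruct (R_complete _ (square_cauchy _ M HM')) as [P HP]. exists P. split; auto.
  pose proof (CV_minus _ _ _ _ HP (square_triangle _ M HM')) as H. rewrite Rminus_0_r in H.
  eapply Un_cv_ext; [|apply H]. intros N; simpl. rewrite triangle_antidiag_H. ring. Qed.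

(* k <= 2^k, used to absorb the factor k of the mean value bound. *)
Lemma INR_le_pow2 k : INR k <= 2 ^ k.
Proof. induction k. simpl; lra. rewrite S_INR. change (2 ^ S k) with (2 * 2 ^ k).
  pose proof (pow_R1_Rle 2 k ltac:(lra)). lra. Qed.

Lemma pow_diff t u rho k : Rabs t <= rho -> Rabs u <= rho ->
  rho * Rabs (t ^ k - u ^ k) <= INR k * rho ^ k * Rabs (t - u).
Proof. intros Ht Hu. assert (Hr : 0 <= rho) by (pose proof (Rabs_pos t); lra).
  induction k. simpl. rewrite Rminus_diag, Rabs_R0; lra.
  replace (t ^ S k - u ^ S k) with (t * (t ^ k - u ^ k) + u ^ k * (t - u)) by (simpl; ring).
  pose proof (Rabs_triang (t * (t ^ k - u ^ k)) (u ^ k * (t - u))) as Htri. rewrite !Rabs_mult in Htri.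
  assert (Rabs (u ^ k) <= rho ^ k) by (rewrite <- RPow_abs; apply pow_incr; split; [apply Rabs_pos|auto]).
  pose proof (Rabs_pos (t ^ k - u ^ k)); pose proof (Rabs_pos (t - u)); pose proof (Rabs_pos t).
  pose proof (pow_le rho k Hr). pose proof (pos_INR k).
  assert (rho * (Rabs t * Rabs (t ^ k - u ^ k)) <= rho * (INR k * rho ^ k * Rabs (t - u))).
  { replace (rho * (Rabs t * Rabs (t ^ k - u ^ k))) with (Rabs t * (rho * Rabs (t ^ k - u ^ k))) by ring.
    apply Rle_trans with (rho * (rho * Rabs (t ^ k - u ^ k))).
    apply Rmult_le_compat_r; [nra|auto]. apply Rmult_le_compat_l; auto. }
  assert (rho * (Rabs (u ^ k) * Rabs (t - u)) <= rho * (rho ^ k * Rabs (t - u))).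
  { apply Rmult_le_compat_l; auto. apply Rmult_le_compat_r; auto. }
  rewrite S_INR. simpl. nra. Qed.

Lemma term_diff_bound c x t u rho j k : Rabs x <= 2 * rho -> Rabs t <= rho -> Rabs u <= rho ->
  rho * Rabs (c * x ^ j * (t ^ k - u ^ k)) <= Rabs (t - u) * (Rabs c * (2 * rho) ^ j * (2 * rho) ^ k).
Proof. intros Hx Ht Hu. assert (Hr : 0 <= rho) by (pose proof (Rabs_pos t); lra).
  rewrite !Rabs_mult. pose proof (pow_diff t u rho k Ht Hu) as Hd.
  assert (Hxj : Rabs (x ^ j) <= (2 * rho) ^ j) by (rewrite <- RPow_abs; apply pow_incr; split; [apply Rabs_pos|lra]).
  assert (Hk : INR k * rho ^ k <= (2 * rho) ^ k).
  { rewrite Rpow_mult_distr. apply Rmult_le_compat_r. apply pow_le; lra. apply INR_le_pow2. }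
  pose proof (Rabs_pos c); pose proof (Rabs_pos (x ^ j)); pose proof (Rabs_pos (t - u));
  pose proof (pos_INR k); pose proof (pow_le rho k Hr).
  replace (rho * (Rabs c * Rabs (x ^ j) * Rabs (t ^ k - u ^ k)))
    with (Rabs c * Rabs (x ^ j) * (rho * Rabs (t ^ k - u ^ k))) by ring.
  apply Rle_trans with (Rabs c * Rabs (x ^ j) * (INR k * rho ^ k * Rabs (t - u))).
  { apply Rmult_le_compat_l; auto. apply Rmult_le_pos; auto. }
  replace (Rabs (t - u) * (Rabs c * (2 * rho) ^ j * (2 * rho) ^ k)) with
    (Rabs c * (2 * rho) ^ j * ((2 * rho) ^ k * Rabs (t - u))) by ring.
  apply Rmult_le_compat; try (apply Rmult_le_pos; auto; try apply Rmult_le_pos; auto).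
  apply Rmult_le_compat_l; auto. apply Rmult_le_compat_r; auto. Qed.

Lemma Hf_near_antidiagonal cH s P M2 : taylor2 cH Hf -> s <> 0 ->
  Un_cv (fun N => lsum (fun p => cH (fst p) (snd p) * s ^ (fst p) * (- s) ^ (snd p)) (square N)) P ->
  (forall N, lsum (fun p => Rabs (cH (fst p) (snd p)) * (2 * (Rabs s + 1)) ^ (fst p)
                              * (2 * (Rabs s + 1)) ^ (snd p)) (square N) <= M2) ->
  forall t, t <> 0 -> s + t <> 0 -> Rabs t <= Rabs s + 1 ->
  Rabs (Hf s t - P) <= Rabs (t + s) * M2 / (Rabs s + 1).
Proof. intros HH Hs HP HM2 t Ht Hst Htr.
  set (rho := Rabs s + 1) in *. assert (Hrho : 0 < rho) by (unfold rho; pose proof (Rabs_pos s); lra).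
  destruct (HH s t Hs Ht Hst) as [Hcv _].
  assert (Hcv' : Un_cv (fun N => lsum (fun p => cH (fst p) (snd p) * s ^ (fst p) * t ^ (snd p)) (square N)) (Hf s t)).
  { eapply Un_cv_ext; [|apply Hcv]. intros N; simpl. symmetry. apply (lsum_square (fun j k => cH j k * s ^ j * t ^ k)). }
  rewrite <- (Rminus_0_r (Hf s t - P)). apply (lim_le _ _ 0 _ (CV_minus _ _ _ _ Hcv' HP)). intros N.
  rewrite Rminus_0_r. unfold Rminus at 1. rewrite <- lsum_opp, <- lsum_plus.
  eapply Rle_trans; [apply lsum_abs|].
  apply (Rmult_le_reg_l rho); auto. rewrite <- lsum_scal.
  apply Rle_trans with (lsum (fun p => Rabs (t + s) *
    (Rabs (cH (fst p) (snd p)) * (2 * rho) ^ fst p * (2 * rho) ^ snd p)) (square N)).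
  - apply lsum_le. intros [j k] _. simpl.
    replace (cH j k * s ^ j * t ^ k + - (cH j k * s ^ j * (- s) ^ k))
      with (cH j k * s ^ j * (t ^ k - (- s) ^ k)) by ring.
    replace (t + s) with (t - - s) by ring.
    pose proof (Rabs_pos s). apply term_diff_bound; unfold rho in *; try rewrite Rabs_Ropp; lra.
  - rewrite lsum_scal. replace (rho * (Rabs (t + s) * M2 / rho)) with (Rabs (t + s) * M2) by (field; lra).
    apply Rmult_le_compat_l; [apply Rabs_pos|]. apply HM2. Qed.

(* The numerator of H(s, t) = Hnum s t / (4 s t (s + t)); it vanishes on t = -s. *)
Definition Hnum (s t : R) : R :=
  - (exp (- s - t) * ((- exp s - 3) * s * (exp t - 1) + (exp s - 1) * (3 * exp t + 1) * t)).

Lemma exp_s_exp_neg s : exp s * exp (- s) = 1.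
Proof. rewrite <- exp_plus. replace (s + - s) with 0 by ring. apply exp_0. Qed.

Lemma Hnum_antidiag s : Hnum s (- s) = 0.
Proof. unfold Hnum. replace (- s - - s) with 0 by ring. rewrite exp_0.
  replace ((- exp s - 3) * s * (exp (- s) - 1) + (exp s - 1) * (3 * exp (- s) + 1) * - s)
    with (4 * s * (1 - exp s * exp (- s))) by ring. rewrite exp_s_exp_neg. ring. Qed.

Module HnumDerivative.
Import Coquelicot.Hierarchy Coquelicot.Derive Coquelicot.AutoDerive Coquelicot.Rcomplements.
Lemma Hnum_deriv s : derivable_pt_lim (Hnum s) (- s) (4 * s - exp s + 3 * exp (- s) - 2).
Proof. unfold Hnum. apply is_derive_Reals. auto_derive; auto.
  replace (- s + - - s) with 0 by ring. rewrite exp_0. pose proof (exp_s_exp_neg s). nra. Qed.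
End HnumDerivative.

Lemma right_limits_agree (u v : R -> R) A B :
  (exists d0, 0 < d0 /\ forall h, 0 < h < d0 -> u h = v h) ->
  (forall eps, 0 < eps -> exists d, 0 < d /\ forall h, 0 < h < d -> Rabs (u h - A) <= eps) ->
  (forall eps, 0 < eps -> exists d, 0 < d /\ forall h, 0 < h < d -> Rabs (v h - B) <= eps) ->
  A = B.
Proof. intros [d0 [Hd0 Huv]] HA HB. apply Rminus_diag_uniq, Rabs_le_eps_eq0. intros eps He.
  destruct (HA (eps/2) ltac:(lra)) as [d1 [Hd1 H1]]. destruct (HB (eps/2) ltac:(lra)) as [d2 [Hd2 H2]].
  set (h := Rmin d0 (Rmin d1 d2) / 2).
  assert (Hm : 0 < Rmin d0 (Rmin d1 d2)) by (repeat apply Rmin_pos; auto).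
  assert (Hh : 0 < h < d0 /\ h < d1 /\ h < d2).
  { unfold h. pose proof (Rmin_l d0 (Rmin d1 d2)). pose proof (Rmin_r d0 (Rmin d1 d2)).
    pose proof (Rmin_l d1 d2). pose proof (Rmin_r d1 d2). lra. }
  specialize (H1 h ltac:(lra)). specialize (H2 h ltac:(lra)). rewrite (Huv h ltac:(lra)) in H1.
  replace (A - B) with ((v h - B) - (v h - A)) by ring.
  eapply Rle_trans; [apply Rabs_triang|]. rewrite Rabs_Ropp. lra. Qed.

Lemma Hf_scaled_limit cH s P : taylor2 cH Hf -> s <> 0 ->
  Un_cv (fun N => lsum (fun p => cH (fst p) (snd p) * s ^ (fst p) * (- s) ^ (snd p)) (square N)) P ->
  forall eps, 0 < eps -> exists d, 0 < d /\ forall h, 0 < h < d ->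
    Rabs (Hf s (- s + h) * (4 * s * (- s + h)) - P * (4 * s * - s)) <= eps.
Proof. intros HH Hs HP eps He.
  set (rho := Rabs s + 1). assert (Hrho : 0 < rho) by (unfold rho; pose proof (Rabs_pos s); lra).
  destruct (taylor2_abs cH (2 * rho) HH ltac:(lra)) as [M2 HM2].
  assert (HM20 : 0 <= M2).
  { eapply Rle_trans; [|apply (HM2 O)]. apply lsum_ge0; intros.
    pose proof (Rabs_pos (cH (fst x) (snd x))).
    pose proof (pow_le (2 * rho) (fst x) ltac:(lra)). pose proof (pow_le (2 * rho) (snd x) ltac:(lra)).
    apply Rmult_le_pos; [apply Rmult_le_pos|]; auto. }
  pose proof (Hf_near_antidiagonal cH s P M2 HH Hs HP HM2) as Hclose. fold rho in Hclose.
  set (K := 4 * Rabs s * (M2 + Rabs P) + 1).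
  assert (HK : 0 < K) by (unfold K; pose proof (Rabs_pos P); pose proof (Rabs_pos s); nra).
  exists (Rmin 1 (eps / K)). split; [apply Rmin_pos; [lra|apply Rdiv_lt_0_compat; lra]|].
  intros h [Hh0 Hh1]. pose proof (Rmin_l 1 (eps / K)); pose proof (Rmin_r 1 (eps / K)).
  assert (Htr : Rabs (- s + h) <= rho).
  { unfold rho. eapply Rle_trans; [apply Rabs_triang|]. rewrite Rabs_Ropp, (Rabs_right h) by lra. lra. }
  replace (Hf s (- s + h) * (4 * s * (- s + h)) - P * (4 * s * - s))
    with ((Hf s (- s + h) - P) * (4 * s * (- s + h)) + P * (4 * s * h)) by ring.
  eapply Rle_trans; [apply Rabs_triang|]. rewrite !Rabs_mult, (Rabs_right 4), (Rabs_right h) by lra.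
  assert (Hd : Rabs (Hf s (- s + h) - P) * (4 * Rabs s * Rabs (- s + h)) <= h * (4 * Rabs s * M2)).
  { destruct (Req_dec (- s + h) 0) as [Ht0|Ht0].
    - rewrite Ht0, Rabs_R0, !Rmult_0_r. apply Rmult_le_pos; [lra|]. pose proof (Rabs_pos s).
      apply Rmult_le_pos; lra.
    - specialize (Hclose (- s + h) Ht0 ltac:(lra) Htr). replace (- s + h + s) with h in Hclose by ring.
      rewrite (Rabs_right h) in Hclose by lra.
      apply Rle_trans with (h * M2 / rho * (4 * Rabs s * rho)); [|right; field; lra].
      pose proof (Rabs_pos s). pose proof (Rabs_pos (- s + h)).
      apply Rmult_le_compat; auto; [apply Rabs_pos|nra|nra]. }
  assert (h * K <= eps) by (apply (Rmult_le_reg_r (/ K)); [apply Rinv_0_lt_compat; lra|];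
    rewrite Rmult_assoc, Rinv_r by lra; lra).
  unfold K in *. pose proof (Rabs_pos P). pose proof (Rabs_pos s). nra. Qed.

(* The antidiagonal value of the double series of H is G(s): with t = -s + h the
   difference quotient (Hnum s t - Hnum s (-s)) / h equals 4 s t H(s, t), whose
   limits as h -> 0+ are Hnum'(-s) and -4 s^2 P respectively. *)
Lemma antidiag_value_eq_G cH s P : taylor2 cH Hf -> s <> 0 ->
  Un_cv (fun N => lsum (fun p => cH (fst p) (snd p) * s ^ (fst p) * (- s) ^ (snd p)) (square N)) P ->
  P = Gf s.
Proof. intros HH Hs HP. pose proof (Rabs_pos_lt s Hs) as Hs0.
  assert (Hlim : 4 * s - exp s + 3 * exp (- s) - 2 = P * (4 * s * - s)).
  { apply (right_limits_agree (fun h => (Hnum s (- s + h) - Hnum s (- s)) / h)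
                              (fun h => Hf s (- s + h) * (4 * s * (- s + h)))).
    - exists (Rabs s). split; auto. intros h Hh.
      assert (- s + h <> 0) by (intro E; assert (h = s) by lra; subst h; rewrite Rabs_right in Hh; lra).
      rewrite Hnum_antidiag. unfold Hf. fold (Hnum s (- s + h)). field. repeat split; lra.
    - intros eps He. destruct (HnumDerivative.Hnum_deriv s eps He) as [d Hd].
      exists d. split; [apply cond_pos|]. intros h Hh. left. apply Hd; [lra|rewrite Rabs_right; lra].
    - apply (Hf_scaled_limit cH s P HH Hs HP). }
  unfold Gf. apply (Rmult_eq_reg_r (4 * s ^ 2)).
  - field_simplify; [|auto]. lra.
  - apply Rmult_integral_contrapositive; split; [lra|apply pow_nonzero; auto]. Qed.

Lemma sum_single a n N : sum_f_R0 (fun k => if Nat.eqb k n then a else 0) N = if Nat.leb n N then a else 0.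
Proof. induction N.
  - simpl. destruct n; simpl; auto.
  - rewrite tech5, IHN. destruct (Nat.leb_spec n N); destruct (Nat.eqb_spec (S N) n);
    destruct (Nat.leb_spec n (S N)); try lia; ring. Qed.

Lemma pser_tail_bound (e : nat -> R) B n s N : (forall k, (k < n)%nat -> e k = 0) -> 0 < s <= 1 ->
  (forall N, sum_f_R0 (fun k => Rabs (e k)) N <= B) -> (n <= N)%nat ->
  Rabs (sum_f_R0 (fun k => e k * s ^ k) N - e n * s ^ n) <= s ^ (S n) * B.
Proof. intros Hlow Hs HB HN.
  assert (Hsplit : sum_f_R0 (fun k => e k * s ^ k) N - e n * s ^ n =
    sum_f_R0 (fun k => if Nat.eqb k n then 0 else e k * s ^ k) N).
  { replace (e n * s ^ n) with (sum_f_R0 (fun k => if Nat.eqb k n then e n * s ^ n else 0) N).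
    - rewrite <- minus_sum. apply sum_eq; intros k _. destruct (Nat.eqb_spec k n); subst; ring.
    - rewrite sum_single. apply Nat.leb_le in HN. rewrite HN; auto. }
  rewrite Hsplit. eapply Rle_trans; [apply sum_f_R0_triangle|].
  apply Rle_trans with (sum_f_R0 (fun k => Rabs (e k) * s ^ S n) N).
  2: { rewrite <- scal_sum. apply Rmult_le_compat_l; [apply pow_le; lra|apply HB]. }
  apply sum_Rle. intros k _. pose proof (pow_le s (S n) ltac:(lra)). pose proof (Rabs_pos (e k)).
  destruct (Nat.eqb_spec k n) as [->|Hkn].
  - rewrite Rabs_R0. nra.
  - destruct (Nat.lt_ge_cases k n) as [Hk|Hk].
    + rewrite Hlow, Rmult_0_l, Rabs_R0 by auto. nra.
    + rewrite Rabs_mult, (Rabs_right (s ^ k)) by (apply Rle_ge, pow_le; lra).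
      apply Rmult_le_compat_l; [apply Rabs_pos|].
      replace k with (S n + (k - S n))%nat by lia. rewrite pow_add.
      pose proof (pow_le1 s (k - S n) ltac:(lra)). pose proof (pow_le s (k - S n) ltac:(lra)). nra. Qed.

Lemma pser_zero_coeffs (e : nat -> R) B : (forall N, sum_f_R0 (fun n => Rabs (e n)) N <= B) ->
  (forall s, 0 < s <= 1 -> Un_cv (sum_f_R0 (fun n => e n * s ^ n)) 0) -> forall n, e n = 0.
Proof. intros HB Hcv0.
  assert (HB0 : 0 <= B) by (eapply Rle_trans; [|apply (HB O)]; simpl; apply Rabs_pos).
  intros n. induction n as [n IH] using (well_founded_induction lt_wf).
  assert (Hen : forall s, 0 < s <= 1 -> Rabs (e n) <= s * B).
  { intros s Hs.
    assert (Hlim : Rabs (0 - e n * s ^ n) <= s ^ (S n) * B).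
    { apply (lim_le_ev _ _ _ _ n (Hcv0 s Hs)). intros N HN. apply pser_tail_bound; auto. }
    rewrite Rminus_0_l, Rabs_Ropp, Rabs_mult, (Rabs_right (s ^ n)) in Hlim by (apply Rle_ge, pow_le; lra).
    simpl in Hlim. assert (0 < s ^ n) by (apply pow_lt; lra).
    apply (Rmult_le_reg_r (s ^ n)); auto. nra. }
  apply Rabs_le_eps_eq0. intros eps He.
  set (s := Rmin 1 (eps / (B + 1))).
  assert (0 < s) by (unfold s; apply Rmin_pos; [lra|apply Rdiv_lt_0_compat; lra]).
  assert (s <= 1) by apply Rmin_l. assert (s <= eps / (B + 1)) by apply Rmin_r.
  eapply Rle_trans; [apply (Hen s ltac:(lra))|].
  apply Rle_trans with (eps / (B + 1) * B); [apply Rmult_le_compat_r; auto|].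
  apply (Rmult_le_reg_r (B + 1)); [lra|]. field_simplify; nra. Qed.

Lemma antidiag_H_abs_bound cH : taylor2 cH Hf ->
  exists M, forall N, sum_f_R0 (fun n => Rabs (antidiag_H cH n)) N <= M.
Proof. intros HH. destruct (taylor2_abs cH 1 HH ltac:(lra)) as [M HM]. exists M. intros N.
  apply Rle_trans with (lsum (fun p => Rabs (cH (fst p) (snd p)) * 1 ^ (fst p) * 1 ^ (snd p)) (triangle N)).
  - rewrite (lsum_triangle (fun j k => Rabs (cH j k) * 1 ^ j * 1 ^ k)). apply sum_Rle; intros n _.
    unfold antidiag_H. eapply Rle_trans; [apply sum_f_R0_triangle|]. right. apply sum_eq; intros.
    rewrite Rabs_mult, pow_1_abs, !pow1. ring.
  - eapply Rle_trans; [|apply (HM N)]. apply lsum_incl_le; auto using NoDup_triangle, NoDup_square, incl_triangle_square.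
    intros; rewrite !pow1, !Rmult_1_r; apply Rabs_pos. Qed.

(* c^G_n = sum_{j+k=n} c^H_jk (-1)^k: both are Taylor coefficients of G(s) = H(s,-s). *)
Lemma antidiag_H_eq_cG cH cG : taylor2 cH Hf -> taylor1 cG Gf -> forall n, antidiag_H cH n = cG n.
Proof. intros HH HG.
  destruct (antidiag_H_abs_bound cH HH) as [MH HMH].
  destruct (taylor1_abs cG Gf 1 HG ltac:(lra)) as [BG HBG].
  intros n. apply Rminus_diag_uniq. revert n.
  apply (pser_zero_coeffs _ (MH + BG)).
  - intros N. apply Rle_trans with
      (sum_f_R0 (fun n => Rabs (antidiag_H cH n)) N + sum_f_R0 (fun n => Rabs (cG n)) N).
    + rewrite <- plus_sum. apply sum_Rle; intros n _. unfold Rminus.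
      pose proof (Rabs_triang (antidiag_H cH n) (- cG n)). rewrite Rabs_Ropp in *. lra.
    + apply Rplus_le_compat; [apply HMH|]. eapply Rle_trans; [|apply (HBG N)].
      right. apply sum_eq; intros; rewrite pow1; ring.
  - intros s Hs. destruct (antidiag_H_series_cv cH s HH ltac:(lra)) as [P [HP1 HP2]].
    rewrite (antidiag_value_eq_G cH s P HH ltac:(lra) HP1) in HP2.
    pose proof (CV_minus _ _ _ _ HP2 (HG s ltac:(lra))) as H. rewrite Rminus_diag in H.
    eapply Un_cv_ext; [|apply H]. intros N; simpl. rewrite <- minus_sum. apply sum_eq; intros; ring. Qed.

(** * The exponential e^{-h} and the functional calculus F(nabla) *)

Section FunctionalCalculus.
Variable theta : nat -> nat -> R.
Notation mul := (mul theta).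

Lemma bnd_powA x K : bnd x K -> forall k, bnd (powA theta x k) ((2 * K) ^ k).
Proof. intros Hx k. induction k; simpl. eapply bnd_mono; [apply bnd_one|lra].
  eapply bnd_mono; [apply mul_bnd; eauto|]. lra. Qed.

Lemma L1_powA x : L1 x -> forall k, L1 (powA theta x k).
Proof. intros Hx k. induction k; simpl. apply L1_one. apply L1_mul; auto. Qed.

Lemma expA_conv x K : bnd x K ->
  L1 (expA theta x) /\ l1_converges (partial_series (fun k => / INR (fact k)) (powA theta x)) (expA theta x).
Proof. intros Hx. apply (series_complete _ _ (fun k => (2 * K) ^ k)); [apply bnd_powA; auto|].
  apply CV_Cauchy. destruct (exist_exp (2 * K)) as [l Hl]. exists l.
  eapply Un_cv_ext; [|apply Hl]. intros N; simpl. apply sum_eq; intros.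
  rewrite Rabs_right; auto. apply Rle_ge, Rlt_le, Rinv_0_lt_compat, INR_fact_lt_0. Qed.

Lemma powA_comm x h : L1 x -> L1 h -> mul x h = mul h x ->
  forall k, mul (powA theta x k) h = mul h (powA theta x k).
Proof. intros Hx Hh Hc k. pose proof (L1_powA x Hx) as HP. induction k; simpl.
  - destruct Hh as [Mh Hh']. rewrite (mul_one_l theta h Mh Hh'), (mul_one_r theta h Mh Hh'). auto.
  - rewrite mulA, Hc, <- mulA, IHk, mulA; auto. Qed.

(* e^{-h} commutes with h: pass to the limit in the partial sums of the exponential. *)
Lemma expA_comm h K : bnd h K -> mul (expA theta (opp h)) h = mul h (expA theta (opp h)).
Proof. intros Hh. assert (Hx : bnd (opp h) K) by (apply bnd_opp; auto).
  destruct (expA_conv (opp h) K Hx) as [HE Hc].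
  assert (HL : L1 h) by (exists K; auto). assert (HLx : L1 (opp h)) by (exists K; auto).
  pose proof (L1_powA _ HLx) as HP.
  assert (Hxc : mul (opp h) h = mul h (opp h)).
  { rewrite (mul_opp_l theta h h K K Hh Hh), (mul_opp_r theta h h K K Hh Hh). auto. }
  assert (HPs : forall N, L1 (partial_series (fun k => / INR (fact k)) (powA theta (opp h)) N)).
  { intros N; apply L1_Csum; auto. }
  apply functional_extensionality; intros n.
  eapply Ccv_unique; [apply (l1_converges_mul_r theta h _ _ HL Hc HPs HE n)|].
  eapply Ccv_ext; [|apply (l1_converges_mul_l theta h _ _ HL Hc HPs HE n)]. intros N. simpl.
  unfold partial_series. rewrite (mul_Csum_r theta h), (mul_Csum_l theta h); auto.
  f_equal. apply map_ext; intros k. rewrite (powA_comm (opp h) h); auto. Qed.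

(* F(nabla)(a) converges in l^1 for an entire F (its Taylor series converges absolutely). *)
Lemma fcalc1_conv h c F a Kh Ma : taylor1 c F -> bnd h Kh -> bnd a Ma ->
  L1 (fcalc1 theta h c a) /\
  l1_converges (partial_series c (fun j => Nat.iter j (nabla theta h) a)) (fcalc1 theta h c a).
Proof. intros HT Hh Ha. pose proof (bnd_ge0 _ _ Hh). pose proof (bnd_ge0 _ _ Ha).
  apply (series_complete _ _ (fun j => (4 * Kh + 1) ^ j * Ma)).
  - intros k. eapply bnd_mono; [apply bnd_iter; eauto|]. apply Rmult_le_compat_r; auto. apply pow_incr; lra.
  - eapply Cauchy_crit_ext; [|apply (cauchy_scal _ Ma (taylor1_cauchy c F (4 * Kh + 1) HT ltac:(lra)))].
    intros N; apply sum_eq; intros; ring. Qed.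

Lemma Csum_first (f : nat -> C) N : (forall j, (1 <= j)%nat -> f j = C0) -> Csum (map f (seq 0 (N + 1))) = f O.
Proof. intros H. replace (N + 1)%nat with (S N) by lia. simpl. rewrite Csum_zero. unfold C0; Cring.
  intros x Hx. apply in_seq in Hx. apply H; lia. Qed.

(* The K-term: phi0 (e^{-h} K(nabla)(X)) = 1/2 phi0 (e^{-h} X), since every term
   nabla^{j+1} vanishes under phi0 (e^{-h} .) and K(0) = 1/2. *)
Lemma trace_K_term h K cK X MX : taylor1 cK Kf -> bnd h K -> bnd X MX ->
  phi0 (mul (expA theta (opp h)) (fcalc1 theta h cK X)) = Cscal (1/2) (phi0 (mul (expA theta (opp h)) X)).
Proof. intros HT Hh HX.
  destruct (expA_conv (opp h) K (bnd_opp _ _ Hh)) as [HE _].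
  pose proof (expA_comm h K Hh) as Hc.
  set (E := expA theta (opp h)) in *.
  destruct (fcalc1_conv h cK Kf X K MX HT Hh HX) as [HF HcF].
  assert (HL : L1 h) by (exists K; auto). assert (HLX : L1 X) by (exists MX; auto).
  assert (HPs : forall N, L1 (partial_series cK (fun j => Nat.iter j (nabla theta h) X) N)).
  { intros N; apply L1_Csum; intros; apply L1_iter; auto. }
  unfold phi0. eapply Ccv_unique; [apply (l1_converges_mul_l theta E _ _ HE HcF HPs HF Z4zero)|].
  eapply Ccv_ext; [|apply Ccv_const]. intros N. simpl.
  unfold partial_series. rewrite (mul_Csum_r theta E cK (fun j => Nat.iter j (nabla theta h) X)); auto.
  2: { intros; apply L1_iter; auto. }
  symmetry. rewrite Csum_first.
  - simpl Nat.iter. rewrite (taylor1_c0 cK Kf (1/2) HT Kf_lim). reflexivity.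
  - intros [|j] Hj; [lia|]. pose proof (phi0_comm_iter theta h E X j HL HE HLX Hc) as Z. unfold phi0 in Z.
    rewrite Z. unfold C0; Cring. Qed.

End FunctionalCalculus.

(** * Double series in l^1 and the H-term *)

Definition square_partial (c : nat * nat -> R) (W : nat * nat -> NCT) (N : nat) : NCT :=
  fun n => Csum (map (fun p => Cscal (c p) (W p n)) (square N)).

Definition square_rest (N M : nat) : list (nat * nat) :=
  filter (fun x => if in_dec eqd x (square N) then false else true) (square M).

Lemma lsum_square_diff (g : nat * nat -> R) N M : (N <= M)%nat ->
  lsum g (square M) - lsum g (square N) = lsum g (square_rest N M).
Proof. intros H. unfold square_rest.
  rewrite (lsum_split g (square N) (square M)) by auto using NoDup_square, incl_square. ring. Qed.

Lemma square_partial_diff c W N M : (N <= M)%nat ->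
  sub (square_partial c W M) (square_partial c W N) =
  (fun n => Csum (map (fun p => Cscal (c p) (W p n)) (square_rest N M))).
Proof. intros H. apply functional_extensionality; intros n. unfold square_partial, sub, add, opp.
  apply C_ext; simpl; rewrite ?Csum_fst, ?Csum_snd, <- lsum_square_diff by auto; ring. Qed.

Lemma square_series_complete (c : nat * nat -> R) (W : nat * nat -> NCT) (bw : nat * nat -> R) Mb :
  (forall p, bnd (W p) (bw p)) -> (forall N, lsum (fun p => Rabs (c p) * bw p) (square N) <= Mb) ->
  L1 (pointwise_lim (square_partial c W)) /\
  l1_converges (square_partial c W) (pointwise_lim (square_partial c W)).
Proof. intros HW HM.
  assert (Hbw : forall p, 0 <= bw p) by (intros; eapply bnd_ge0; eauto).
  assert (Hcb : forall p, Rabs (c p * bw p) = Rabs (c p) * bw p)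
    by (intros; rewrite Rabs_mult, (Rabs_right (bw p)); auto; apply Rle_ge; auto).
  assert (HM' : forall N, lsum (fun p => Rabs (c p * bw p)) (square N) <= Mb)
    by (intros N; rewrite (lsum_ext _ (fun p => Rabs (c p) * bw p)); auto).
  apply l1_complete.
  - intros N. apply L1_Csum. intros; exists (bw k); auto.
  - eapply l1_cauchy_of_majorant; [|apply (square_abs_cv _ _ HM')].
    intros N M H. rewrite square_partial_diff, lsum_square_diff by auto.
    apply (bnd_Csum (fun p => scal (c p) (W p))). intros k _. rewrite Hcb. apply bnd_scal; auto. Qed.

Lemma fcalc2_square theta h c a b : fcalc2 theta h c a b =
  pointwise_lim (square_partial (fun p => c (fst p) (snd p))
    (fun p => mul theta (Nat.iter (fst p) (nabla theta h) a) (Nat.iter (snd p) (nabla theta h) b))).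
Proof. apply functional_extensionality; intros n. unfold fcalc2, pointwise_lim, square_partial, square.
  f_equal. apply functional_extensionality; intros N. rewrite Csum_list_prod. reflexivity. Qed.

(* The real rearrangement behind the H-term: for t_n = O(R^n), summing
   c^H_jk (-1)^k t_{j+k} by squares or summing c^G_n t_n gives the same limit. *)
Lemma antidiag_rearrange cH cG (t : nat -> R) Cb Rr M : taylor2 cH Hf -> taylor1 cG Gf ->
  0 <= Cb -> (forall n, Rabs (t n) <= Cb * Rr ^ n) ->
  (forall N, lsum (fun p => Rabs (cH (fst p) (snd p)) * Rr ^ fst p * Rr ^ snd p) (square N) <= M) ->
  Un_cv (fun N => lsum (fun p => cH (fst p) (snd p) * (-1) ^ snd p * t (fst p + snd p)%nat) (square N)
                  - sum_f_R0 (fun n => cG n * t n) N) 0.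
Proof. intros HH HG HC Ht HM.
  set (g := fun p : nat * nat => cH (fst p) (snd p) * (-1) ^ snd p * t (fst p + snd p)%nat).
  assert (Hg : forall N, lsum (fun p => Rabs (g p)) (square N) <= Cb * M).
  { intros N. eapply Rle_trans; [|apply (Rmult_le_compat_l Cb _ _ HC (HM N))].
    rewrite <- lsum_scal. apply lsum_le. intros [j k] _. unfold g; simpl.
    rewrite !Rabs_mult, pow_1_abs, Rmult_1_r. specialize (Ht (j + k)%nat). rewrite pow_add in Ht.
    pose proof (Rabs_pos (cH j k)).
    replace (Cb * (Rabs (cH j k) * Rr ^ j * Rr ^ k)) with (Rabs (cH j k) * (Cb * (Rr ^ j * Rr ^ k))) by ring.
    apply Rmult_le_compat_l; lra. }
  eapply Un_cv_ext; [|apply (square_triangle g _ Hg)]. intros N. simpl. f_equal.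
  rewrite (lsum_triangle (fun j k => g (j, k))), <- lsum_seq, <- lsum_seq. apply lsum_ext. intros n _.
  rewrite <- (antidiag_H_eq_cG cH cG HH HG n). unfold antidiag_H. rewrite Rmult_comm, scal_sum.
  apply sum_eq. intros j Hj. unfold g; simpl. replace (j + (n - j))%nat with n by lia. ring. Qed.

Section HTerm.
Variables (theta : nat -> nat -> R) (h a : NCT) (K Ma : R).
Hypotheses (Hh : bnd h K) (Ha : bnd a Ma).
Notation mul := (mul theta).
Notation E := (expA theta (opp h)).
Notation nab := (nabla theta h).

(* The sequence T(n) = phi0 (nabla^n(e^{-h} a) a) to which both sides reduce. *)
Definition trace_seq (n : nat) : C := phi0 (mul (Nat.iter n nab (mul E a)) a).

Definition nabla_pair (p : nat * nat) : NCT := mul (Nat.iter (fst p) nab a) (Nat.iter (snd p) nab a).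

Let L1_h : L1 h := ex_intro _ K Hh.
Let L1_a : L1 a := ex_intro _ Ma Ha.
Let L1_E : L1 E := proj1 (expA_conv theta (opp h) K (bnd_opp _ _ Hh)).

Lemma bnd_nabla_pair p : bnd (nabla_pair p) (2 * Ma * Ma * ((4 * K + 1) ^ fst p * (4 * K + 1) ^ snd p)).
Proof. destruct p as [j k]. unfold nabla_pair; simpl. pose proof (bnd_ge0 _ _ Hh). pose proof (bnd_ge0 _ _ Ha).
  eapply bnd_mono; [apply mul_bnd; apply bnd_iter; eauto|].
  assert ((4 * K) ^ j <= (4 * K + 1) ^ j) by (apply pow_incr; lra).
  assert ((4 * K) ^ k <= (4 * K + 1) ^ k) by (apply pow_incr; lra).
  pose proof (pow_le (4 * K) j ltac:(lra)). pose proof (pow_le (4 * K) k ltac:(lra)).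
  assert ((4 * K) ^ j * Ma * ((4 * K) ^ k * Ma) <= (4 * K + 1) ^ j * Ma * ((4 * K + 1) ^ k * Ma))
    by (apply Rmult_le_compat; try apply Rmult_le_pos; auto; apply Rmult_le_compat_r; auto).
  nra. Qed.

Lemma trace_seq_bound : exists Cb, 0 <= Cb /\ forall n, cnorm (trace_seq n) <= Cb * (4 * K + 1) ^ n.
Proof. destruct L1_E as [ME HME]. pose proof (mul_bnd theta _ _ ME Ma HME Ha) as HEa.
  pose proof (bnd_ge0 _ _ Hh). pose proof (bnd_ge0 _ _ Ha). pose proof (bnd_ge0 _ _ HEa).
  exists (2 * (2 * ME * Ma) * Ma). split; [nra|]. intros n. unfold trace_seq, phi0.
  eapply Rle_trans; [apply (bnd_pt _ _ Z4zero (mul_bnd theta _ _ _ _ (bnd_iter theta h _ K _ n Hh HEa) Ha))|].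
  assert ((4 * K) ^ n <= (4 * K + 1) ^ n) by (apply pow_incr; lra).
  assert (0 <= 2 * ME * Ma * Ma) by nra.
  assert (2 * ME * Ma * Ma * (4 * K) ^ n <= 2 * ME * Ma * Ma * (4 * K + 1) ^ n)
    by (apply Rmult_le_compat_l; auto). nra. Qed.

Lemma H_series_conv cH : taylor2 cH Hf ->
  exists M, (forall N, lsum (fun p => Rabs (cH (fst p) (snd p)) * (4 * K + 1) ^ fst p * (4 * K + 1) ^ snd p)
                              (square N) <= M) /\
  L1 (pointwise_lim (square_partial (fun p => cH (fst p) (snd p)) nabla_pair)) /\
  l1_converges (square_partial (fun p => cH (fst p) (snd p)) nabla_pair)
               (pointwise_lim (square_partial (fun p => cH (fst p) (snd p)) nabla_pair)).
Proof. intros HH. pose proof (bnd_ge0 _ _ Hh). pose proof (bnd_ge0 _ _ Ha).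
  destruct (taylor2_abs cH (4 * K + 1) HH ltac:(lra)) as [M HM]. exists M. split; auto.
  apply (square_series_complete _ _ _ (2 * Ma * Ma * M) bnd_nabla_pair).
  intros N. rewrite (lsum_ext _ (fun p => (2 * Ma * Ma) *
    (Rabs (cH (fst p) (snd p)) * (4 * K + 1) ^ fst p * (4 * K + 1) ^ snd p))) by (intros; ring).
  rewrite lsum_scal. apply Rmult_le_compat_l; [nra|apply HM]. Qed.

Lemma trace_square_partial cH N :
  phi0 (mul E (square_partial (fun p => cH (fst p) (snd p)) nabla_pair N)) =
  Csum (map (fun p => Cscal (cH (fst p) (snd p) * (-1) ^ snd p) (trace_seq (fst p + snd p)%nat)) (square N)).
Proof. unfold square_partial, phi0.
  rewrite (mul_Csum_r theta E); [|apply L1_E|intros; eexists; apply bnd_nabla_pair].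
  f_equal. apply map_ext. intros [j k]. unfold nabla_pair; simpl.
  pose proof (trace_nabla_product theta h E a a j k L1_h L1_E L1_a L1_a (expA_comm theta h K Hh)) as Z.
  unfold phi0 in Z. rewrite Z. unfold trace_seq, phi0, Cscal; simpl. apply C_ext; simpl; ring. Qed.

Lemma trace_G_partial cG N :
  phi0 (mul (partial_series cG (fun j => Nat.iter j nab (mul E a)) N) a) =
  Csum (map (fun n => Cscal (cG n) (trace_seq n)) (seq 0 (N + 1))).
Proof. unfold partial_series, phi0. rewrite (mul_Csum_l theta a cG); auto using L1_a.
  intros; apply L1_iter; [apply L1_h|apply L1_mul; [apply L1_E|apply L1_a]]. Qed.

(* Both sides are limits of partial sums of T, by squares with the coefficients
   c^H_jk (-1)^k on the left and with the coefficients c^G_n on the right. *)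
Lemma trace_H_term cH cG : taylor2 cH Hf -> taylor1 cG Gf ->
  L1 (fcalc2 theta h cH a a) /\
  phi0 (mul E (fcalc2 theta h cH a a)) = phi0 (mul (fcalc1 theta h cG (mul E a)) a).
Proof. intros HH HG.
  destruct (H_series_conv cH HH) as [M [HM [HF HcF]]].
  assert (HQs : forall N, L1 (square_partial (fun p => cH (fst p) (snd p)) nabla_pair N))
    by (intros; apply L1_Csum; intros; eexists; apply bnd_nabla_pair).
  pose proof (l1_converges_mul_l theta E _ _ L1_E HcF HQs HF Z4zero) as Hleft.
  assert (HEa : L1 (mul E a)) by (apply L1_mul; [apply L1_E|apply L1_a]).
  destruct HEa as [MEa HEa].
  destruct (fcalc1_conv theta h cG Gf (mul E a) K MEa HG Hh HEa) as [HF2 HcF2].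
  assert (HPs : forall N, L1 (partial_series cG (fun j => Nat.iter j nab (mul E a)) N)).
  { intros N; apply L1_Csum; intros; apply L1_iter; [apply L1_h|exists MEa; auto]. }
  pose proof (l1_converges_mul_r theta a _ _ L1_a HcF2 HPs HF2 Z4zero) as Hright.
  destruct trace_seq_bound as [Cb [HCb HT]].
  rewrite (fcalc2_square theta h cH a a). split; [exact HF|].
  unfold phi0. apply (Ccv_same_limit _ _ _ _ Hleft Hright).
  - eapply Un_cv_ext; [|apply (antidiag_rearrange cH cG (fun n => fst (trace_seq n)) Cb (4 * K + 1) M HH HG HCb)].
    + intros N. change (mul ?x ?y Z4zero) with (phi0 (mul x y)).
      rewrite trace_square_partial, trace_G_partial, Csum_fst, Csum_fst, lsum_seq. reflexivity.
    + intros n. eapply Rle_trans; [apply cnorm_le_fst|apply HT].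
    + exact HM.
  - eapply Un_cv_ext; [|apply (antidiag_rearrange cH cG (fun n => snd (trace_seq n)) Cb (4 * K + 1) M HH HG HCb)].
    + intros N. change (mul ?x ?y Z4zero) with (phi0 (mul x y)).
      rewrite trace_square_partial, trace_G_partial, Csum_snd, Csum_snd, lsum_seq. reflexivity.
    + intros n. eapply Rle_trans; [apply cnorm_le_snd|apply HT].
    + exact HM. Qed.

End HTerm.

Lemma mul_sum4 theta e f : L1 e -> (forall i, L1 (f i)) ->
  mul theta e (sum4 f) = sum4 (fun i => mul theta e (f i)).
Proof. intros He Hf. unfold sum4. rewrite !mul_addR; auto; repeat apply L1_add; auto. Qed.

Lemma bnd_sum4 (f : nat -> NCT) K : (forall i, bnd (f i) K) -> bnd (sum4 f) (K + K + K + K).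
Proof. intros H. unfold sum4. repeat apply bnd_add; auto. Qed.

Theorem theorem5p4 (theta : nat -> nat -> R)
  (Hskew : forall k l : nat, theta k l = - theta l k)
  (cK : nat -> R) (cH : nat -> nat -> R) (cG : nat -> R)
  (HK : taylor1 cK Kf) (HH : taylor2 cH Hf) (HG : taylor1 cG Gf)
  (h : NCT) (Hsmooth : rapid h) (Hsa : star theta h = h) :
  phi0 (curvR theta cK cH h) =
  Cadd (Cscal (1 / 2) (phi0 (sum4 (fun i => mul theta (expA theta (opp h)) (delta i (delta i h))))))
       (phi0 (sum4 (fun i =>
          mul theta (fcalc1 theta h cG (mul theta (expA theta (opp h)) (delta i h))) (delta i h)))).
Proof.
  destruct (bnd_rapid h Hsmooth) as [K HKb].
  assert (Hh : bnd h K) by apply (HKb 1%nat).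
  assert (Hd : forall i, bnd (delta i h) K) by (intros i; apply HKb).
  pose proof (proj1 (expA_conv theta (opp h) K (bnd_opp _ _ Hh))) as HE.
  unfold curvR. change (phi0 (add ?f ?g)) with (Cadd (phi0 f) (phi0 g)). f_equal.
  -
    rewrite (trace_K_term theta h K cK _ (K + K + K + K) HK Hh) by (apply bnd_sum4; apply HKb).
    rewrite (mul_sum4 theta _ (fun i => delta i (delta i h))) by (auto; intros i; exists K; apply HKb).
    reflexivity.
  -
    rewrite mul_sum4 by (auto; intros i; apply (trace_H_term theta h (delta i h) K K Hh (Hd i) cH cG HH HG)).
    change (phi0 (sum4 ?f)) with
      (Cadd (Cadd (Cadd (phi0 (f 1%nat)) (phi0 (f 2%nat))) (phi0 (f 3%nat))) (phi0 (f 4%nat))).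
    cbv beta. rewrite !(fun i => proj2 (trace_H_term theta h (delta i h) K K Hh (Hd i) cH cG HH HG)).
    reflexivity. Qed.
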